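(* Let $N\ge 2$ and $d\ge 1$ be integers, $[N]=\{1,\dots,N\}$, and let $0\le\sigma\le\tau$. Let $\psi:[0,\infty)\to[0,\infty)$ be continuous, nonincreasing, with $\psi(s)>0$ for all $s\ge0$ and $\sup_{s\ge0}\psi(s)\le1$. Let $x_i^0\in C^1([-\tau,0],\mathbb{R}^d)$, $v_i^0\in C([-\tau,0],\mathbb{R}^d)$ with $\frac{\mathrm d}{\mathrm dt}x_i^0=v_i^0$ on $[-\tau,0]$, $i\in[N]$, and let $\{x_i,v_i\}_{i\in[N]}$ be the global solution of \[ \dot x_i(t)=v_i(t),\qquad \dot v_i(t)=\sum_{j\ne i}a_{ij}(t)\big(v_j(t-\tau)-v_i(t-\sigma)\big),\quad t>0, \] with $a_{ij}(t)=\frac{1}{N-1}\psi(|x_i(t-\sigma)-x_j(t-\tau)|)$ and $x_i=x_i^0$, $v_i=v_i^0$ on $[-\tau,0]$. Let $K$ be the smallest integer with $K\sigma\ge2\tau$. Assume there exists $\beta>0$ with \[ 4\tau\le\beta\left(2e^{-2\tau}-1\right) \] and $C>0$ with \[ e^{C\tau}\big(4\tau e^{C\tau}+\beta(1-e^{-2\tau})\big)+C\le\psi\Big(\Delta^0_x+\mathcal{W}^K_\sigma\Delta^0_v+\frac{e^{C\tau}}{C}\big(1+\beta^{-1}e^{2\tau+C\sigma}+e^{C\tau}(\tau-\sigma)\big)\mathcal{Z}^K_\sigma\Delta^0_v\Big), \] where $\mathcal{Z}^K_\sigma:=Z^K_\sigma+Z^{K-1}_\sigma\beta\big(1-(1+2\tau)e^{-2\tau}\big)$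 and $\mathcal{W}^K_\sigma:=Z^K_\sigma-(1+\sigma)(Z^{K-1}_\sigma+1)$. Then the solution exhibits asymptotic flocking, i.e. $\sup_{t\ge0}d_x(t)<\infty$ and $\lim_{t\to\infty}d_v(t)=0$, and $d_v(t)$ decays exponentially in time with rate $C$.
   Context: $d_x(t):=\max_{i,j}|x_i(t)-x_j(t)|$, $d_v(t):=\max_{i,j}|v_i(t)-v_j(t)|$ for $t\ge0$. $\Delta^0_x:=\max_{i,j}\max_{s,t\in[-\tau,0]}|x_i^0(s)-x_j^0(t)|$, $\Delta^0_v:=\max_{i,j}\max_{s,t\in[-\tau,0]}|v_i^0(s)-v_j^0(t)|$. For $k\ge0$, \[ Z^k_\sigma:=\frac{1}{2\sqrt{\sigma(1+\sigma)}}\Big[\big((1+\sigma)+\sqrt{\sigma(1+\sigma)}\big)^{k+1}-\big((1+\sigma)-\sqrt{\sigma(1+\sigma)}\big)^{k+1}\Big], \] a polynomial in $\sigma$; equivalently $Z^0_\sigma=1$, $Z^k_\sigma=1+(1+\sigma)Z^{k-1}_\sigma+\sigma\sum_{m=0}^{k-1}Z^m_\sigma$ for $k\ge1$. ''Decays exponentially with rate $C$'' means there is a constant $A>0$ with $d_v(t)\le Ae^{-Ct}$ for all $t\ge0$. *)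

From Stdlib Require Import Reals Lra Lia List ZArith.
From Coquelicot Require Import Coquelicot.
Import ListNotations.
Open Scope R_scope.

(* Vectors of R^d are represented as functions nat -> R (components 0..d-1).
   Particles are indexed by 0..N-1. *)

Definition eucl (d : nat) (a : nat -> R) : R :=
  sqrt (fold_right Rplus 0 (map (fun k => (a k) ^ 2) (seq 0 d))).

Definition diam (N d : nat) (f : nat -> R -> nat -> R) (t : R) : R :=
  fold_right Rmax 0
    (map (fun p => eucl d (fun k => f (fst p) t k - f (snd p) t k))
         (list_prod (seq 0 N) (seq 0 N))).

Definition is_Delta0 (N d : nat) (tau : R) (f : nat -> R -> nat -> R) (D : R) : Prop :=
  (forall i j s t, (i < N)%nat -> (j < N)%nat -> -tau <= s <= 0 -> -tau <= t <= 0 ->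
      eucl d (fun k => f i s k - f j t k) <= D) /\
  (exists i j s t, (i < N)%nat /\ (j < N)%nat /\ -tau <= s <= 0 /\ -tau <= t <= 0 /\
      eucl d (fun k => f i s k - f j t k) = D).

(** Z^k_sigma by the closed formula, for integer k >= -1 (Z^{-1}_sigma = 0). *)
Definition Zsig (sigma : R) (k : Z) : R :=
  let r := sqrt (sigma * (1 + sigma)) in
  / (2 * r) * (((1 + sigma) + r) ^ (Z.to_nat (k + 1)) - ((1 + sigma) - r) ^ (Z.to_nat (k + 1))).

Definition cont_on (D : R -> Prop) (f : R -> R) : Prop :=
  forall t, D t -> filterlim f (within D (locally t)) (locally (f t)).

Definition deriv_on_interval (a b : R) (f f' : R -> R) : Prop :=
  forall t, a <= t <= b ->
    filterlim (fun h => (f (t + h) - f t) / h)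
      (within (fun h => h <> 0 /\ a <= t + h <= b) (locally 0)) (locally (f' t)).

Definition noninc_on_nonneg (psi : R -> R) : Prop :=
  forall s1 s2, 0 <= s1 -> s1 <= s2 -> psi s2 <= psi s1.

Definition vel_rhs (N d : nat) (sigma tau : R) (psi : R -> R)
  (x v : nat -> R -> nat -> R) (i : nat) (t : R) (k : nat) : R :=
  fold_right Rplus 0
    (map (fun j =>
       if Nat.eqb j i then 0 else
       / (INR N - 1) * psi (eucl d (fun l => x i (t - sigma) l - x j (t - tau) l))
         * (v j (t - tau) k - v i (t - sigma) k))
     (seq 0 N)).

(* On [-tau, K sigma] nothing is known about the weights, but |v_i'| is
   bounded by the velocity diameter of the previous sigma-layer, so each layer multiplies
   that diameter by at most 1 + 2 sigma: it stays below B = (1 + 2 sigma)^K Delta_v.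
   From T0 = K sigma >= 2 tau on, a continuity argument propagates the bound
   d_v(t) < (B + eps) e^(-C (t - T0)), together with |v_i'| <= kappa times that bound, where
   kappa = e^(C tau) / (1 - (tau - sigma) e^(C tau)) absorbs the delays.  While the bound holds,
   integrating the velocities keeps every position gap below the argument D of psi in the
   hypothesis (this is where Z^K_sigma >= ((1 + 2 sigma)^(K+1) - 1) / (2 sigma) is used), so all
   weights are at least psi(D) / (N - 1).  If the bound were touched by some pair, projecting on
   the direction of that pair shows that the consensus term contracts it at rate psi(D) while
   the delays cost at most 4 tau kappa e^(C tau); the hypotheses on beta and C give
   psi(D) > C + 4 tau kappa e^(C tau), so the pair cannot reach the bound. *)

From Stdlib Require Import Reals ZArith Lra Lia List Classical.
From Coquelicot Require Import Coquelicot.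
Import ListNotations.
Open Scope R_scope.

(** * Finite sums and Euclidean vectors *)

Definition lsum (l : list nat) (f : nat -> R) : R := fold_right Rplus 0 (map f l).

Lemma lsum_ext l f g : (forall k, In k l -> f k = g k) -> lsum l f = lsum l g.
Proof.
  intros H. unfold lsum. f_equal. apply map_ext_in. exact H.
Qed.

Lemma lsum_plus l f g : lsum l (fun k => f k + g k) = lsum l f + lsum l g.
Proof. induction l; unfold lsum in *; simpl; [lra|]. rewrite IHl; lra. Qed.

Lemma lsum_minus l f g : lsum l (fun k => f k - g k) = lsum l f - lsum l g.
Proof. induction l; unfold lsum in *; simpl; [lra|]. rewrite IHl; lra. Qed.

Lemma lsum_scal l c f : lsum l (fun k => c * f k) = c * lsum l f.
Proof. induction l; unfold lsum in *; simpl; [lra|]. rewrite IHl; lra. Qed.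

Lemma lsum_le l f g : (forall k, In k l -> f k <= g k) -> lsum l f <= lsum l g.
Proof.
  induction l as [|a l IH]; intros H; unfold lsum in *; simpl; [lra|].
  apply Rplus_le_compat; [apply H; left; auto|apply IH; intros; apply H; right; auto].
Qed.

Lemma lsum_const l c : lsum l (fun _ => c) = INR (length l) * c.
Proof.
  induction l; unfold lsum in *; simpl length; [simpl; lra|].
  rewrite S_INR. simpl. rewrite IHl. lra.
Qed.

Lemma lsum_nonneg l f : (forall k, In k l -> 0 <= f k) -> 0 <= lsum l f.
Proof.
  intros H. replace 0 with (lsum l (fun _ => 0)) by (rewrite lsum_const; lra).
  apply lsum_le; auto.
Qed.

Lemma lsum_swap l1 l2 (f : nat -> nat -> R) :
  lsum l1 (fun k => lsum l2 (fun j => f j k)) = lsum l2 (fun j => lsum l1 (fun k => f j k)).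
Proof.
  induction l1 as [|a l1 IH].
  - simpl. replace 0 with (INR (length l2) * 0) at 1 by lra.
    rewrite <- lsum_const. apply lsum_ext. reflexivity.
  - change (lsum (a :: l1) ?g) with (g a + lsum l1 g). rewrite IH, <- lsum_plus.
    apply lsum_ext. reflexivity.
Qed.

Lemma lsum_seq_S n f : lsum (seq 0 (S n)) f = lsum (seq 0 n) f + f n.
Proof.
  rewrite seq_S. unfold lsum. rewrite map_app, fold_right_app. simpl.
  generalize (f n). induction (seq 0 n); intros r; simpl; [lra|]. rewrite IHl. lra.
Qed.

Lemma lsum_count_neq N i : (i < N)%nat ->
  lsum (seq 0 N) (fun j => if Nat.eqb j i then 0 else 1) = INR N - 1.
Proof.
  induction N as [|N IH]; intros Hi; [lia|].
  rewrite lsum_seq_S, S_INR. destruct (Nat.eq_dec i N) as [->|Hne].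
  - rewrite Nat.eqb_refl, (lsum_ext _ _ (fun _ => 1)), lsum_const, length_seq; [lra|].
    intros k Hk. apply in_seq in Hk. destruct (Nat.eqb_spec k N); [lia|auto].
  - rewrite IH by lia. destruct (Nat.eqb_spec N i); [lia|lra].
Qed.

Definition dot (d : nat) (a b : nat -> R) : R := lsum (seq 0 d) (fun k => a k * b k).

Definition unit_dir (d : nat) (w : nat -> R) : nat -> R := fun k => / eucl d w * w k.

Lemma eucl_dot d a : eucl d a = sqrt (dot d a a).
Proof.
  unfold eucl, dot, lsum. do 2 f_equal. apply map_ext. intros; simpl; ring.
Qed.

Lemma dot_ge0 d a : 0 <= dot d a a.
Proof. apply lsum_nonneg. intros. apply Rle_0_sqr. Qed.

Lemma eucl_ge0 d a : 0 <= eucl d a.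
Proof. rewrite eucl_dot. apply sqrt_pos. Qed.

Lemma eucl_sq d a : eucl d a * eucl d a = dot d a a.
Proof. rewrite eucl_dot. apply sqrt_sqrt, dot_ge0. Qed.

Lemma dot_ext d a b a' b' : (forall k, (k < d)%nat -> a k = a' k) ->
  (forall k, (k < d)%nat -> b k = b' k) -> dot d a b = dot d a' b'.
Proof.
  intros Ha Hb. apply lsum_ext. intros k Hk. apply in_seq in Hk.
  rewrite Ha, Hb by lia. reflexivity.
Qed.

Lemma eucl_ext d a b : (forall k, (k < d)%nat -> a k = b k) -> eucl d a = eucl d b.
Proof. intros H. rewrite !eucl_dot. f_equal. apply dot_ext; auto. Qed.

Lemma dot_comm d a b : dot d a b = dot d b a.
Proof. apply lsum_ext. intros; ring. Qed.

Lemma dot_minusr d a b c : dot d a (fun k => b k - c k) = dot d a b - dot d a c.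
Proof. unfold dot. rewrite <- lsum_minus. apply lsum_ext. intros; ring. Qed.

Lemma dot_scall d a b l : dot d (fun k => l * a k) b = l * dot d a b.
Proof. unfold dot. rewrite <- lsum_scal. apply lsum_ext. intros; ring. Qed.

Lemma dot_oppl d a b : dot d (fun k => - a k) b = - dot d a b.
Proof.
  rewrite (dot_ext d _ _ (fun k => -1 * a k) b), dot_scall by (intros; ring). ring.
Qed.

Lemma dot_sub3 d e a b c c' : dot d e (fun k => a k - c' k) =
  dot d e (fun k => a k - b k) + dot d e (fun k => b k - c k) + dot d e (fun k => c k - c' k).
Proof. unfold dot. rewrite <- !lsum_plus. apply lsum_ext. intros; ring. Qed.

Lemma dot_le_eucl d a b : dot d a b <= eucl d a * eucl d b.
Proof.
  set (A := dot d a a). set (B := dot d b b). set (D := dot d a b).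
  assert (HA : 0 <= A) by apply dot_ge0. assert (HB : 0 <= B) by apply dot_ge0.
  assert (Hq : forall l, 0 <= A - 2 * l * D + l * l * B).
  { intros l. replace (A - 2 * l * D + l * l * B)
      with (dot d (fun k => a k - l * b k) (fun k => a k - l * b k)); [apply dot_ge0|].
    unfold A, B, D, dot. rewrite <- !lsum_scal, <- lsum_minus, <- lsum_plus.
    apply lsum_ext. intros; ring. }
  rewrite !eucl_dot. fold A B D.
  destruct (Rle_dec D 0) as [HD|HD].
  - apply Rle_trans with 0; auto. apply Rmult_le_pos; apply sqrt_pos.
  - destruct (Req_dec B 0) as [HB0|HB0].
    + exfalso. specialize (Hq ((A + 1) / (2 * D))). rewrite HB0 in Hq.
      replace (A - 2 * ((A + 1) / (2 * D)) * D + (A + 1) / (2 * D) * ((A + 1) / (2 * D)) * 0)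
        with (-1) in Hq by (field; lra). lra.
    + assert (HDB : D * D <= A * B).
      { specialize (Hq (D / B)).
        replace (A - 2 * (D / B) * D + D / B * (D / B) * B) with ((A * B - D * D) / B)
          in Hq by (field; lra).
        apply Rmult_le_compat_r with (r := B) in Hq; [|lra].
        unfold Rdiv in Hq. rewrite Rmult_assoc, Rinv_l in Hq by lra. lra. }
      rewrite <- sqrt_mult_alt by auto.
      rewrite <- (sqrt_square D) by lra. apply sqrt_le_1_alt; lra.
Qed.

Lemma eucl_triangle d a b : eucl d (fun k => a k + b k) <= eucl d a + eucl d b.
Proof.
  assert (H1 := dot_le_eucl d a b). assert (Ha := eucl_ge0 d a). assert (Hb := eucl_ge0 d b).
  assert (Hs : dot d (fun k => a k + b k) (fun k => a k + b k) = dot d a a + 2 * dot d a b + dot d b b).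
  { unfold dot. rewrite <- !lsum_scal, <- !lsum_plus. apply lsum_ext. intros; ring. }
  rewrite (eucl_dot d (fun k => a k + b k)), Hs.
  rewrite <- (sqrt_square (eucl d a + eucl d b)) by lra.
  apply sqrt_le_1_alt. rewrite <- !eucl_sq. nra.
Qed.

Lemma eucl_sub_triangle d a b c :
  eucl d (fun k => a k - c k) <= eucl d (fun k => a k - b k) + eucl d (fun k => b k - c k).
Proof.
  rewrite (eucl_ext d _ (fun k => (a k - b k) + (b k - c k))) by (intros; ring).
  apply eucl_triangle.
Qed.

Lemma eucl_sub_sym d a b : eucl d (fun k => a k - b k) = eucl d (fun k => b k - a k).
Proof. rewrite !eucl_dot. f_equal. apply lsum_ext. intros; ring. Qed.

Lemma eucl_oppl d a : eucl d (fun k => - a k) = eucl d a.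
Proof. rewrite !eucl_dot. f_equal. apply lsum_ext. intros; ring. Qed.

Lemma eucl_zero d a : (forall k, (k < d)%nat -> a k = 0) -> eucl d a = 0.
Proof.
  intros H. rewrite (eucl_ext d a (fun _ => 0)), eucl_dot by auto.
  unfold dot. rewrite (lsum_ext _ _ (fun _ => 0)) by (intros; ring).
  rewrite lsum_const, Rmult_0_r. apply sqrt_0.
Qed.

Lemma dot_le_eucl_unit d e z : eucl d e <= 1 -> dot d e z <= eucl d z.
Proof.
  intros He. apply Rle_trans with (eucl d e * eucl d z); [apply dot_le_eucl|].
  assert (H := eucl_ge0 d z). assert (H' := eucl_ge0 d e). nra.
Qed.

Lemma Rabs_dot_le_eucl_unit d e z : eucl d e <= 1 -> Rabs (dot d e z) <= eucl d z.
Proof.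
  intros He. apply Rabs_le. split.
  - assert (H := dot_le_eucl_unit d (fun k => - e k) z).
    rewrite dot_oppl, eucl_oppl in H. lra.
  - apply dot_le_eucl_unit; auto.
Qed.

Lemma unit_dirP d w : 0 < eucl d w ->
  eucl d (unit_dir d w) = 1 /\ dot d (unit_dir d w) w = eucl d w.
Proof.
  intros Hp. unfold unit_dir.
  assert (Hd : dot d w w = eucl d w * eucl d w) by (rewrite eucl_sq; auto).
  split.
  - rewrite eucl_dot, dot_scall, dot_comm, dot_scall, Hd.
    replace (/ eucl d w * (/ eucl d w * (eucl d w * eucl d w))) with 1 by (field; lra).
    apply sqrt_1.
  - rewrite dot_scall, Hd. field. lra.
Qed.

(** * One-variable real analysis *)

Lemma ball_Rabs (x e y : R) : ball x e y <-> Rabs (y - x) < e.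
Proof. reflexivity. Qed.

Section FilterLimits.
Context {F : (R -> Prop) -> Prop} {FF : Filter F}.

Lemma filterlim_Rplus (f g : R -> R) a b :
  filterlim f F (locally a) -> filterlim g F (locally b) ->
  filterlim (fun s => f s + g s) F (locally (a + b)).
Proof. intros Hf Hg. eapply filterlim_comp_2; [exact Hf|exact Hg|]. apply (filterlim_plus a b). Qed.

Lemma filterlim_Rmult (f g : R -> R) a b :
  filterlim f F (locally a) -> filterlim g F (locally b) ->
  filterlim (fun s => f s * g s) F (locally (a * b)).
Proof. intros Hf Hg. eapply filterlim_comp_2; [exact Hf|exact Hg|]. apply (filterlim_mult a b). Qed.

Lemma filterlim_Rminus (f g : R -> R) a b :
  filterlim f F (locally a) -> filterlim g F (locally b) ->
  filterlim (fun s => f s - g s) F (locally (a - b)).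
Proof.
  intros Hf Hg. apply (filterlim_ext (fun s => f s + (-1) * g s)); [intros; ring|].
  replace (a - b) with (a + -1 * b) by ring.
  apply filterlim_Rplus, filterlim_Rmult; auto. apply filterlim_const.
Qed.

Lemma filterlim_lsum l (f : nat -> R -> R) (L : nat -> R) :
  (forall k, In k l -> filterlim (f k) F (locally (L k))) ->
  filterlim (fun s => lsum l (fun k => f k s)) F (locally (lsum l L)).
Proof.
  induction l as [|a l IH]; intros H; [apply filterlim_const|].
  apply filterlim_Rplus; [apply H; left; auto|apply IH; intros; apply H; right; auto].
Qed.

Lemma filterlim_dot d (A B : R -> nat -> R) (a b : nat -> R) :
  (forall k, (k < d)%nat -> filterlim (fun s => A s k) F (locally (a k))) ->
  (forall k, (k < d)%nat -> filterlim (fun s => B s k) F (locally (b k))) ->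
  filterlim (fun s => dot d (A s) (B s)) F (locally (dot d a b)).
Proof.
  intros HA HB. apply (filterlim_lsum (seq 0 d) (fun k s => A s k * B s k)).
  intros k Hk. apply in_seq in Hk. apply filterlim_Rmult; [apply HA|apply HB]; lia.
Qed.

Lemma filterlim_eucl d (A : R -> nat -> R) (a : nat -> R) :
  (forall k, (k < d)%nat -> filterlim (fun s => A s k) F (locally (a k))) ->
  filterlim (fun s => eucl d (A s)) F (locally (eucl d a)).
Proof.
  intros HA. apply (filterlim_ext (fun s => sqrt (dot d (A s) (A s)))).
  { intros s. symmetry. apply eucl_dot. }
  rewrite eucl_dot. eapply filterlim_comp; [apply filterlim_dot; exact HA|].
  apply (continuity_pt_filterlim sqrt), continuity_pt_sqrt, dot_ge0.
Qed.

End FilterLimits.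

Lemma filterlim_within_subset (D1 D2 : R -> Prop) (f : R -> R) u l :
  (forall s, D1 s -> D2 s) ->
  filterlim f (within D2 (locally u)) (locally l) -> filterlim f (within D1 (locally u)) (locally l).
Proof.
  intros Hs H P HP. specialize (H P HP). unfold filtermap, within in *.
  eapply filter_imp; [|exact H]. simpl. intros y Hy H1. apply Hy, Hs, H1.
Qed.

Lemma filterlim_within_shift (D : R -> Prop) (f : R -> R) u l c :
  filterlim f (within D (locally (u - c))) (locally l) ->
  filterlim (fun s => f (s - c)) (within (fun s => D (s - c)) (locally u)) (locally l).
Proof.
  intros H P HP. destruct (H P HP) as [eps Heps]. exists eps. intros y Hy HD.
  apply Heps; auto. rewrite ball_Rabs in Hy. apply ball_Rabs.
  replace (y - c - (u - c)) with (y - u) by ring. exact Hy.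
Qed.

Lemma filterlim_within_interior (D : R -> Prop) (f : R -> R) u l (eps : posreal) :
  (forall s, Rabs (s - u) < eps -> D s) ->
  filterlim f (within D (locally u)) (locally l) -> filterlim f (locally u) (locally l).
Proof.
  intros Hs H P HP. destruct (H P HP) as [e He].
  exists (mkposreal _ (Rmin_stable_in_posreal e eps)). intros y Hy.
  rewrite ball_Rabs in Hy. simpl in Hy.
  assert (Rmin e eps <= e) by apply Rmin_l. assert (Rmin e eps <= eps) by apply Rmin_r.
  apply He; [apply ball_Rabs|apply Hs]; lra.
Qed.

Lemma filterlim_within_of_locally (f : R -> R) u l D :
  filterlim f (locally u) (locally l) -> filterlim f (within D (locally u)) (locally l).
Proof.
  intros H P HP. unfold filtermap, within. eapply filter_imp; [|exact (H P HP)]. auto.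
Qed.

Lemma is_derive_lsum l (f : nat -> R -> R) (df : nat -> R) t :
  (forall k, In k l -> is_derive (f k) t (df k)) ->
  is_derive (fun s => lsum l (fun k => f k s)) t (lsum l df).
Proof.
  induction l as [|a l IH]; intros H; [apply (is_derive_const 0 t)|].
  apply (is_derive_plus (f a) (fun s => lsum l (fun k => f k s)));
    [apply H; left; auto|apply IH; intros; apply H; right; auto].
Qed.

Lemma is_derive_dot d (e : nat -> R) (V : R -> nat -> R) (DV : nat -> R) t :
  (forall k, (k < d)%nat -> is_derive (fun s => V s k) t (DV k)) ->
  is_derive (fun s => dot d e (V s)) t (dot d e DV).
Proof.
  intros H. apply (is_derive_lsum (seq 0 d) (fun k s => e k * V s k) (fun k => e k * DV k)).
  intros k Hk. apply in_seq in Hk. apply is_derive_scal. apply H; lia.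
Qed.

Lemma is_derive_shift (f : R -> R) df t c :
  is_derive f (t - c) df -> is_derive (fun s => f (s - c)) t df.
Proof.
  intros H. apply is_derive_Reals. apply is_derive_Reals in H.
  intros eps Heps. destruct (H eps Heps) as [del Hd]. exists del. intros h Hh Hh2.
  replace (t + h - c) with (t - c + h) by ring. apply Hd; auto.
Qed.

Lemma exp_ge1 a : 0 <= a -> 1 <= exp a.
Proof. intros H. assert (H1 := exp_ineq1_le a). lra. Qed.

Lemma is_derive_Rminus f g t a b :
  is_derive f t a -> is_derive g t b -> is_derive (fun s => f s - g s) t (a - b).
Proof. exact (is_derive_minus f g t a b). Qed.

Lemma is_derive_exp_decay (L C T s : R) :
  is_derive (fun u => L * exp (- C * (u - T))) s (- C * L * exp (- C * (s - T))).
Proof. auto_derive; [auto|unfold Rminus; ring]. Qed.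

Lemma filterlim_exp_decay (L C T u : R) :
  filterlim (fun s => L * exp (- C * (s - T))) (locally u) (locally (L * exp (- C * (u - T)))).
Proof.
  apply (continuity_pt_filterlim (fun s => L * exp (- C * (s - T)))), derivable_continuous_pt.
  exists (- C * L * exp (- C * (u - T))). apply is_derive_Reals, is_derive_exp_decay.
Qed.

Lemma deriv_on_interval_is_derive a b f f' t :
  a < t < b -> deriv_on_interval a b f f' -> is_derive f t (f' t).
Proof.
  intros Ht H. specialize (H t ltac:(lra)).
  apply is_derive_Reals. intros eps Heps.
  assert (HP : locally (f' t) (fun y => Rabs (y - f' t) < eps))
    by (exists (mkposreal eps Heps); intros y Hy; exact Hy).
  destruct (H _ HP) as [del Hdel].
  assert (Hm : 0 < Rmin del (Rmin (t - a) (b - t)))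
    by (apply Rmin_pos; [apply cond_pos|apply Rmin_pos; lra]).
  exists (mkposreal _ Hm). intros h Hh0 Hh. simpl in Hh.
  assert (Rmin del (Rmin (t - a) (b - t)) <= del) by apply Rmin_l.
  assert (Rmin del (Rmin (t - a) (b - t)) <= Rmin (t - a) (b - t)) by apply Rmin_r.
  assert (Rmin (t - a) (b - t) <= t - a) by apply Rmin_l.
  assert (Rmin (t - a) (b - t) <= b - t) by apply Rmin_r.
  apply Rabs_lt_between in Hh.
  apply Hdel; [|split; auto; lra].
  apply ball_Rabs. unfold minus, plus, opp; simpl.
  replace (h + - 0) with h by ring. apply Rabs_lt_between. lra.
Qed.

(* [MVT_gen] needs continuity at every point of [a, b]; composing with the clamp
   provides it from one-sided continuity at the endpoints. *)
Definition clamp (a b u : R) := Rmax a (Rmin b u).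

Lemma clamp_lip a b u v : a <= b -> Rabs (clamp a b u - clamp a b v) <= Rabs (u - v).
Proof.
  intros Hab. unfold clamp, Rmax, Rmin.
  repeat destruct Rle_dec; unfold Rabs; repeat destruct Rcase_abs; lra.
Qed.

Lemma clamp_in a b u : a <= b -> a <= clamp a b u <= b.
Proof. intros Hab. unfold clamp, Rmax, Rmin. repeat destruct Rle_dec; lra. Qed.

Lemma clamp_id a b u : a <= u <= b -> clamp a b u = u.
Proof. intros Hab. unfold clamp, Rmax, Rmin. repeat destruct Rle_dec; lra. Qed.

Lemma cont_on_subinterval f a b a' b' :
  a <= a' -> b' <= b -> cont_on (fun s => a <= s <= b) f -> cont_on (fun s => a' <= s <= b') f.
Proof.
  intros H1 H2 H u Hu. apply (filterlim_within_subset _ (fun s => a <= s <= b)).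
  - intros; lra.
  - apply H; lra.
Qed.

Lemma mvt_le (f df : R -> R) a b M :
  a <= b -> cont_on (fun s => a <= s <= b) f ->
  (forall u, a < u < b -> is_derive f u (df u) /\ df u <= M) ->
  f b - f a <= M * (b - a).
Proof.
  intros Hab Hc Hd.
  destruct (Req_dec a b) as [<-|Hne]; [lra|].
  set (g := fun u => f (clamp a b u)).
  set (dg := fun u => if Rlt_dec a u then if Rlt_dec u b then df u else M else M).
  assert (Hg : forall u, a < u < b -> is_derive g u (dg u)).
  { intros u Hu. unfold dg. destruct (Rlt_dec a u); [|lra]. destruct (Rlt_dec u b); [|lra].
    apply (is_derive_ext_loc f g); [|apply Hd; auto].
    exists (mkposreal _ (Rmin_stable_in_posreal (mkposreal (u - a) ltac:(lra))
                                                (mkposreal (b - u) ltac:(lra)))).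
    intros y Hy. rewrite ball_Rabs in Hy. simpl in Hy. unfold g. rewrite clamp_id; auto.
    assert (Rmin (u - a) (b - u) <= u - a) by apply Rmin_l.
    assert (Rmin (u - a) (b - u) <= b - u) by apply Rmin_r.
    apply Rabs_lt_between in Hy. lra. }
  assert (Hgc : forall u, a <= u <= b -> continuity_pt g u).
  { intros u Hu. apply (continuity_pt_filterlim g).
    apply filterlim_comp with (f := clamp a b) (g := f) (G := within (fun s => a <= s <= b) (locally (clamp a b u))).
    - intros P [eps He]. exists eps. intros y Hy. apply He.
      + apply ball_Rabs. rewrite ball_Rabs in Hy. eapply Rle_lt_trans; [apply clamp_lip; lra|auto].
      + apply clamp_in; lra.
    - apply Hc, clamp_in; lra. }
  destruct (MVT_gen g a b dg) as [c [Hc1 Hc2]];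
    rewrite ?Rmin_left, ?Rmax_right in * by lra; auto.
  unfold g in Hc2. rewrite !clamp_id in Hc2 by lra. rewrite Hc2.
  apply Rmult_le_compat_r; [lra|]. unfold dg.
  destruct (Rlt_dec a c); [|lra]. destruct (Rlt_dec c b); [|lra]. apply Hd; lra.
Qed.

Lemma mvt_le_except (f df : R -> R) (l : list R) a b M :
  a <= b -> cont_on (fun s => a <= s <= b) f ->
  (forall u, a < u < b -> ~ In u l -> is_derive f u (df u) /\ df u <= M) ->
  f b - f a <= M * (b - a).
Proof.
  revert a b. induction l as [|c l IH]; intros a b Hab Hc Hd.
  { apply (mvt_le f df); auto. }
  assert (Hd' : forall a' b', a <= a' -> a' <= b' -> b' <= b -> (a' < c < b' -> False) ->
    f b' - f a' <= M * (b' - a')).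
  { intros a' b' H1 H2 H3 Hout. apply IH; [lra|apply (cont_on_subinterval f a b); auto|].
    intros u Hu Hul. apply Hd; [lra|]. intros [<-|Hin]; [apply Hout; lra|auto]. }
  destruct (Rlt_dec a c) as [Hac|Hac]; [destruct (Rlt_dec c b) as [Hcb|Hcb]|].
  - assert (H1 := Hd' a c ltac:(lra) ltac:(lra) ltac:(lra) ltac:(lra)).
    assert (H2 := Hd' c b ltac:(lra) ltac:(lra) ltac:(lra) ltac:(lra)). lra.
  - apply Hd'; lra.
  - apply Hd'; lra.
Qed.

Lemma mvt_le_exp_tail (h dh : R -> R) (l : list R) r T B0 L C :
  0 < C -> 0 <= r -> 0 <= T -> 0 <= B0 -> 0 <= L ->
  cont_on (fun s => 0 <= s <= r) h ->
  (forall u, 0 < u < r -> ~ In u l -> is_derive h u (dh u)) ->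
  (forall u, 0 < u <= T -> u <= r -> dh u <= B0) ->
  (forall u, T <= u <= r -> dh u <= L * exp (- C * (u - T))) ->
  h r - h 0 <= T * B0 + L / C.
Proof.
  intros HC Hr HT HB0 HL Hcont Hder H1 H2.
  assert (HLC : 0 <= L / C) by (apply Rdiv_le_0_compat; lra).
  set (m := Rmin r T). assert (m <= r) by apply Rmin_l. assert (m <= T) by apply Rmin_r.
  assert (0 <= m) by (apply Rmin_glb; lra).
  assert (Hfirst : h m - h 0 <= B0 * (m - 0)).
  { apply (mvt_le_except h dh l); [lra|apply (cont_on_subinterval h 0 r); auto; lra|].
    intros u Hu Hul. split; [apply Hder; [lra|exact Hul]|]. apply H1; lra. }
  assert (B0 * m <= T * B0) by nra.
  destruct (Rle_dec r T) as [HrT|HrT].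
  { replace m with r in * by (unfold m; rewrite Rmin_left; auto). lra. }
  replace m with T in * by (unfold m; rewrite Rmin_right; lra).
  set (Phi := fun s => L / C * exp (- C * (s - T))).
  assert (Hsecond : (h r + Phi r) - (h T + Phi T) <= 0 * (r - T)).
  { apply (mvt_le_except (fun s => h s + Phi s) (fun s => dh s + (- C * (L / C) * exp (- C * (s - T)))) l);
      [lra| |].
    - intros u Hu. apply filterlim_Rplus; [apply (cont_on_subinterval h 0 r); auto; lra|].
      apply filterlim_within_of_locally, filterlim_exp_decay.
    - intros u Hu Hul. split.
      + apply (is_derive_plus h Phi); [apply Hder; [lra|exact Hul]|apply is_derive_exp_decay].
      + assert (Hb := H2 u ltac:(lra)).
        replace (- C * (L / C) * exp (- C * (u - T))) with (- (L * exp (- C * (u - T)))) by (field; lra).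
        lra. }
  assert (0 <= Phi r) by (apply Rmult_le_pos; [auto|apply Rlt_le, exp_pos]).
  assert (Phi T = L / C) by (unfold Phi; rewrite Rminus_diag, Rmult_0_r, exp_0; ring).
  lra.
Qed.

Lemma eucl_mvt_le d (V DV : R -> nat -> R) a b M :
  a <= b -> 0 <= M ->
  (forall k, (k < d)%nat -> cont_on (fun s => a <= s <= b) (fun s => V s k)) ->
  (forall k u, (k < d)%nat -> a < u < b -> is_derive (fun s => V s k) u (DV u k)) ->
  (forall u, a < u < b -> eucl d (DV u) <= M) ->
  eucl d (fun k => V b k - V a k) <= M * (b - a).
Proof.
  intros Hab HM Hc Hd HB.
  set (w := fun k => V b k - V a k).
  destruct (Req_dec (eucl d w) 0) as [H0|Hne].
  { rewrite H0. apply Rmult_le_pos; lra. }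
  assert (Hp : 0 < eucl d w) by (assert (H := eucl_ge0 d w); lra).
  destruct (unit_dirP d w Hp) as [He1 He2]. set (e := unit_dir d w) in *.
  rewrite <- He2. unfold w. rewrite dot_minusr.
  apply (mvt_le (fun s => dot d e (V s)) (fun s => dot d e (DV s))); auto.
  - intros u Hu. apply filterlim_dot; [intros; apply filterlim_const|].
    intros k Hk. apply Hc; auto.
  - intros u Hu. split; [apply is_derive_dot; intros k Hk; apply Hd; auto|].
    eapply Rle_trans; [apply dot_le_eucl_unit; lra|]. apply HB; auto.
Qed.

Lemma continuous_induction (a : R) (P : R -> Prop) :
  (forall t, a <= t -> (forall s, a <= s < t -> P s) ->
     exists del, 0 < del /\ forall s, t <= s < t + del -> P s) ->
  forall t, a <= t -> P t.
Proof.
  intros H t1 Ht1. apply NNPP. intros Hn.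
  set (E := fun t => a <= t <= t1 /\ forall s, a <= s < t -> P s).
  assert (HEb : bound E) by (exists t1; intros y [Hy _]; lra).
  assert (HEa : exists y, E y) by (exists a; split; [lra|intros; lra]).
  destruct (completeness E HEb HEa) as [m [Hub Hlub]].
  assert (Ham : a <= m) by (apply Hub; split; [lra|intros; lra]).
  assert (Hmt : m <= t1) by (apply Hlub; intros y [Hy _]; lra).
  assert (Hbelow : forall s, a <= s < m -> P s).
  { intros s Hs. apply NNPP. intros Hs2.
    assert (m <= s); [|lra]. apply Hlub. intros y [Hy Hy2].
    destruct (Rle_dec y s) as [|Hys]; auto. exfalso. apply Hs2, Hy2. lra. }
  destruct (H m Ham Hbelow) as [del [Hdel Hd]].
  destruct (Rlt_dec m t1) as [Hlt|Hge]; [|apply Hn, Hd; lra].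
  set (m' := Rmin (m + del / 2) t1).
  assert (m' <= t1) by apply Rmin_r. assert (m' <= m + del / 2) by apply Rmin_l.
  assert (m < m') by (apply Rmin_glb_lt; lra).
  assert (m' <= m); [|lra]. apply Hub. split; [lra|].
  intros s Hs. destruct (Rlt_dec s m); [apply Hbelow; lra|]. apply Hd. lra.
Qed.

Lemma pos_near (h : R -> R) t : filterlim h (locally t) (locally (h t)) -> 0 < h t ->
  exists del, 0 < del /\ forall s, Rabs (s - t) < del -> 0 < h s.
Proof.
  intros Hc Hp.
  destruct (proj1 (filterlim_locally h (h t)) Hc (mkposreal (h t / 2) ltac:(lra))) as [del Hd].
  exists del. split; [apply cond_pos|]. intros s Hs.
  specialize (Hd s Hs). rewrite ball_Rabs in Hd. apply Rabs_lt_between in Hd. simpl in Hd. lra.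
Qed.

Lemma le_of_lt_left (f g : R -> R) t del : 0 < del ->
  filterlim f (locally t) (locally (f t)) -> filterlim g (locally t) (locally (g t)) ->
  (forall s, t - del < s < t -> f s < g s) -> f t <= g t.
Proof.
  intros Hd0 Hf Hg H. apply Rnot_lt_le. intros Hlt.
  destruct (pos_near (fun s => f s - g s) t (filterlim_Rminus f g _ _ Hf Hg) ltac:(lra))
    as [del' [Hdel Hd]].
  assert (Hm : 0 < Rmin del' del) by (apply Rmin_pos; lra).
  assert (Rmin del' del <= del') by apply Rmin_l. assert (Rmin del' del <= del) by apply Rmin_r.
  specialize (Hd (t - Rmin del' del / 2)). specialize (H (t - Rmin del' del / 2) ltac:(lra)).
  assert (0 < f (t - Rmin del' del / 2) - g (t - Rmin del' del / 2)); [|lra].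
  apply Hd. rewrite Rabs_left; lra.
Qed.

Lemma lt_right_of_lt (f g : R -> R) t :
  filterlim f (locally t) (locally (f t)) -> filterlim g (locally t) (locally (g t)) ->
  f t < g t -> exists del, 0 < del /\ forall s, t <= s < t + del -> f s < g s.
Proof.
  intros Hf Hg Hlt.
  destruct (pos_near (fun s => g s - f s) t (filterlim_Rminus g f _ _ Hg Hf) ltac:(lra))
    as [del [Hdel Hd]].
  exists del. split; auto. intros s Hs.
  assert (0 < g s - f s); [apply Hd; rewrite Rabs_pos_eq; lra|lra].
Qed.

Lemma right_nbhd_Forall (l : list nat) (Q : nat -> R -> Prop) t :
  (forall i, In i l -> exists del, 0 < del /\ forall s, t <= s < t + del -> Q i s) ->
  exists del, 0 < del /\ forall s, t <= s < t + del -> forall i, In i l -> Q i s.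
Proof.
  induction l as [|a l IH]; intros H.
  - exists 1. split; [lra|]. intros s _ i [].
  - destruct (H a (or_introl eq_refl)) as [d1 [Hd1 H1]].
    destruct IH as [d2 [Hd2 H2]]; [intros; apply H; right; auto|].
    exists (Rmin d1 d2). split; [apply Rmin_pos; auto|].
    assert (Rmin d1 d2 <= d1) by apply Rmin_l. assert (Rmin d1 d2 <= d2) by apply Rmin_r.
    intros s Hs i [<-|Hi]; [apply H1|apply H2]; auto; lra.
Qed.

Lemma is_derive_ge0_of_neg_left (h : R -> R) t dh a : a < t -> is_derive h t dh -> h t = 0 ->
  (forall s, a <= s < t -> h s < 0) -> 0 <= dh.
Proof.
  intros Hat Hd H0 Hneg. apply Rnot_lt_le. intros HD.
  apply is_derive_Reals in Hd. destruct (Hd (- dh / 2) ltac:(lra)) as [del Hdel].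
  assert (Hm : 0 < Rmin del (t - a)) by (apply Rmin_pos; [apply cond_pos|lra]).
  assert (Rmin del (t - a) <= del) by apply Rmin_l. assert (Rmin del (t - a) <= t - a) by apply Rmin_r.
  set (k := - Rmin del (t - a) / 2).
  assert (Hk : k < 0) by (unfold k; lra).
  specialize (Hdel k ltac:(lra) ltac:(rewrite Rabs_left; unfold k; lra)).
  rewrite H0 in Hdel. apply Rabs_lt_between in Hdel.
  assert (Hs := Hneg (t + k) ltac:(unfold k; lra)).
  assert (0 < (h (t + k) - 0) / k); [|lra].
  replace ((h (t + k) - 0) / k) with ((- h (t + k)) / (- k)) by (field; lra).
  apply Rdiv_lt_0_compat; lra.
Qed.

Lemma lower_bound_near (f : R -> R) D q :
  cont_on (fun s => 0 <= s) f -> noninc_on_nonneg f -> 0 <= D -> q < f D ->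
  exists eta, 0 < eta /\ forall s, 0 <= s <= D + eta -> q < f s.
Proof.
  intros Hc Hm HD Hq.
  assert (HP : locally (f D) (fun y => Rabs (y - f D) < f D - q))
    by (exists (mkposreal (f D - q) ltac:(lra)); intros y Hy; exact Hy).
  destruct (Hc D HD _ HP) as [eta Heta].
  exists (eta / 2). split; [assert (H := cond_pos eta); lra|]. intros s Hs.
  assert (Hb : ball D eta (D + eta / 2))
    by (rewrite ball_Rabs, Rabs_pos_eq; assert (H := cond_pos eta); lra).
  specialize (Heta (D + eta / 2) Hb ltac:(assert (H := cond_pos eta); simpl; lra)).
  apply Rabs_lt_between in Heta. assert (H := Hm s (D + eta / 2) ltac:(lra) ltac:(lra)). lra.
Qed.

Lemma is_lim_exp_decay (A c : R) : 0 < c -> is_lim (fun t => A * exp (- c * t)) p_infty 0.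
Proof.
  intros Hc.
  assert (H1 : is_lim (fun t => - c * t) p_infty m_infty).
  { assert (H := is_lim_scal_l (fun y => y) (- c) p_infty p_infty (is_lim_id p_infty)).
    simpl in H. unfold Rbar_mult, Rbar_mult' in H.
    destruct (Rle_dec 0 (- c)); [lra|exact H]. }
  assert (H2 : is_lim (fun t => exp (- c * t)) p_infty 0).
  { apply (is_lim_comp exp (fun t => - c * t) p_infty 0 m_infty); [apply is_lim_exp_m|exact H1|].
    exists 0. intros y _ Habs. discriminate. }
  assert (H3 := is_lim_scal_l _ A p_infty 0 H2). simpl in H3. rewrite Rmult_0_r in H3. exact H3.
Qed.

Lemma diam_le N d f t M : 0 <= M ->
  (forall i j, (i < N)%nat -> (j < N)%nat -> eucl d (fun k => f i t k - f j t k) <= M) ->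
  diam N d f t <= M.
Proof.
  intros HM H. unfold diam.
  assert (Hl : forall y, In y (map (fun p => eucl d (fun k => f (fst p) t k - f (snd p) t k))
                                  (list_prod (seq 0 N) (seq 0 N))) -> y <= M).
  { intros y Hy. apply in_map_iff in Hy. destruct Hy as [[i j] [<- Hin]].
    apply in_prod_iff in Hin. destruct Hin as [Hi Hj]. apply in_seq in Hi, Hj. simpl. apply H; lia. }
  revert Hl. generalize (map (fun p => eucl d (fun k => f (fst p) t k - f (snd p) t k))
                           (list_prod (seq 0 N) (seq 0 N))).
  intros l. induction l as [|a l IH]; simpl; intros Hl; auto.
  apply Rmax_lub; [apply Hl; left; auto|apply IH; intros; apply Hl; right; auto].
Qed.

Lemma diam_ge0 N d f t : 0 <= diam N d f t.
Proof.
  unfold diam. generalize (map (fun p => eucl d (fun k => f (fst p) t k - f (snd p) t k))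
                             (list_prod (seq 0 N) (seq 0 N))).
  intros l. induction l; simpl; [lra|]. eapply Rle_trans; [exact IHl|apply Rmax_r].
Qed.

(** * The sequence Z^k_sigma *)

Lemma bernoulli x n : 0 <= x -> 1 + INR n * x <= (1 + x) ^ n.
Proof.
  intros Hx. induction n as [|n IH]; [simpl; lra|].
  rewrite S_INR. simpl pow. assert (0 <= INR n) by apply pos_INR.
  assert (0 <= (1 + x) ^ n) by (apply pow_le; lra). nra.
Qed.

Section Zseq.
Variable s : R.
Hypothesis Hs : 0 < s.
Let r := sqrt (s * (1 + s)).
Let a := 1 + s + r.
Let b := 1 + s - r.

Definition Zn (n : nat) := / (2 * r) * (a ^ S n - b ^ S n).
(* the companion of Z: a^n = Y_n + r Z_{n-1} and b^n = Y_n - r Z_{n-1} *)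
Definition Yn (n : nat) := (a ^ n + b ^ n) / 2.

Let r_pos : 0 < r.
Proof. unfold r. apply sqrt_lt_R0. nra. Qed.

Let r_sq : r * r = s * (1 + s).
Proof. unfold r. apply sqrt_sqrt. nra. Qed.

Let b_nonneg : 0 <= b.
Proof. unfold b. assert (H := r_sq). assert (H2 := r_pos). assert (r <= 1 + s); [nra|lra]. Qed.

Lemma Zn_S n : Zn (S n) = (1 + s) * Zn n + Yn (S n).
Proof.
  unfold Zn, Yn. assert (H2 := r_pos).
  change (a ^ S (S n)) with (a * a ^ S n). change (b ^ S (S n)) with (b * b ^ S n).
  set (A := a ^ S n). set (B := b ^ S n). unfold a, b. field. lra.
Qed.

Lemma Yn_S n : Yn (S n) = Yn n + s * Zn n.
Proof.
  unfold Zn, Yn. assert (H := r_sq). assert (H2 := r_pos).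
  change (a ^ S n) with (a * a ^ n). change (b ^ S n) with (b * b ^ n).
  set (A := a ^ n). set (B := b ^ n).
  apply Rminus_diag_uniq.
  replace ((a * A + b * B) / 2 - ((A + B) / 2 + s * (/ (2 * r) * (a * A - b * B))))
    with ((A - B) * (r * r - s * (1 + s)) / (2 * r)) by (unfold a, b; field; lra).
  rewrite H. field. lra.
Qed.

Lemma Zn_nonneg n : 0 <= Zn n.
Proof.
  unfold Zn. assert (H2 := r_pos). apply Rmult_le_pos.
  - apply Rlt_le, Rinv_0_lt_compat; lra.
  - assert (b ^ S n <= a ^ S n); [|lra].
    apply pow_incr. split; [apply b_nonneg|unfold a, b; lra].
Qed.

Lemma Yn_ge n : (1 <= n)%nat -> 1 + s <= Yn n.
Proof.
  induction n as [|n IH]; intros Hn; [lia|].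
  destruct (Nat.eq_dec n 0) as [->|Hn0]; [unfold Yn, a, b; simpl; lra|].
  rewrite Yn_S. assert (0 <= s * Zn n) by (apply Rmult_le_pos; [lra|apply Zn_nonneg]).
  specialize (IH ltac:(lia)). lra.
Qed.

Lemma Zn_S_excess n : 0 <= Zn (S n) - (1 + s) * (Zn n + 1).
Proof. rewrite Zn_S. assert (H := Yn_ge (S n) ltac:(lia)). lra. Qed.

Lemma Zn_lower n : (1 + 2 * s) ^ S n <= 2 * s * Zn n + 1.
Proof.
  assert (HY : forall m, 1 <= Yn m).
  { intros [|m]; [unfold Yn; simpl; lra|]. assert (H := Yn_ge (S m) ltac:(lia)). lra. }
  induction n as [|n IH].
  - unfold Zn, a, b. assert (H2 := r_pos). simpl.
    replace (/ (2 * r) * ((1 + s + r) * 1 - (1 + s - r) * 1)) with 1 by (field; lra). lra.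
  - rewrite Zn_S, Yn_S. assert (H1 := HY n). assert (H0 := Zn_nonneg n).
    change ((1 + 2 * s) ^ S (S n)) with ((1 + 2 * s) * (1 + 2 * s) ^ S n). nra.
Qed.

End Zseq.

Lemma Zsig_Zn s k : Zsig s (Z.of_nat k) = Zn s k.
Proof. unfold Zsig, Zn. replace (Z.to_nat (Z.of_nat k + 1)) with (S k) by lia. reflexivity. Qed.

(** * Numerical consequences of the hypotheses *)

Definition kappa (sigma tau C : R) : R :=
  exp (C * tau) / (1 - (tau - sigma) * exp (C * tau)).

Lemma kappa_fixed sigma tau C : (tau - sigma) * exp (C * tau) < 1 ->
  exp (C * tau) * (1 + kappa sigma tau C * (tau - sigma)) = kappa sigma tau C.
Proof. intros H. unfold kappa. field. lra. Qed.

Lemma kappa_ge1 sigma tau C : 0 <= C * tau -> sigma <= tau ->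
  (tau - sigma) * exp (C * tau) < 1 -> 1 <= kappa sigma tau C.
Proof.
  intros HC Hst H. assert (Hw := exp_ge1 (C * tau) HC).
  unfold kappa. apply Rmult_le_reg_r with (1 - (tau - sigma) * exp (C * tau)); [lra|].
  unfold Rdiv. rewrite Rmult_assoc, Rinv_l by lra. nra.
Qed.

Section Rates.
Variables (sigma tau beta C p : R).
Hypothesis Hsigma : 0 < sigma.
Hypothesis Hst : sigma <= tau.
Hypothesis Hbeta : 0 < beta.
Hypothesis Hbeta_tau : 4 * tau <= beta * (2 * exp (-2 * tau) - 1).
Hypothesis HC : 0 < C.
Hypothesis Hrate : exp (C * tau) * (4 * tau * exp (C * tau) + beta * (1 - exp (-2 * tau))) + C <= p.
Hypothesis Hp1 : p <= 1.

Let w := exp (C * tau).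
Let zz := 1 - exp (-2 * tau).
Let kap := kappa sigma tau C.

Let w_ge1 : 1 <= w.
Proof. apply exp_ge1, Rmult_le_pos; lra. Qed.

Let zz_bounds : 2 * tau + tau * tau <= zz * ((1 + tau) * (1 + tau)) /\ 0 <= zz.
Proof.
  assert (H1 : (1 + tau) * (1 + tau) <= exp (2 * tau)).
  { assert (H := exp_ineq1_le tau). replace (2 * tau) with (tau + tau) by ring.
    rewrite exp_plus. nra. }
  assert (Hp : 0 < exp (2 * tau)) by apply exp_pos.
  unfold zz. replace (-2 * tau) with (- (2 * tau)) by ring. rewrite exp_Ropp.
  split.
  - assert (/ exp (2 * tau) * ((1 + tau) * (1 + tau)) <= 1); [|nra].
    apply Rmult_le_reg_l with (exp (2 * tau)); [lra|].
    rewrite <- Rmult_assoc, Rinv_r by lra. lra.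
  - assert (/ exp (2 * tau) <= 1); [|lra]. rewrite <- Rinv_1. apply Rinv_le_contravar; nra.
Qed.

Lemma C_4tau_le1 : C + 4 * tau <= 1.
Proof.
  assert (H2 := w_ge1). assert (H3 := proj2 zz_bounds).
  assert (0 <= beta * zz) by (apply Rmult_le_pos; lra).
  assert (4 * tau <= 4 * tau * w) by nra. fold w zz in Hrate. nra.
Qed.

Let w_C_tau : w * (1 - C * tau) <= 1.
Proof.
  unfold w. assert (H := exp_ineq1_le (- (C * tau))). assert (Hp := exp_pos (C * tau)).
  assert (exp (C * tau) * exp (- (C * tau)) = 1) by (rewrite <- exp_plus, Rplus_opp_r; apply exp_0).
  nra.
Qed.

Let w_tau : w * (1 - tau) <= 1.
Proof.
  assert (H := w_C_tau). assert (H1 := C_4tau_le1). assert (H3 := w_ge1).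
  assert (C * tau <= tau * (1 - 4 * tau)) by nra. nra.
Qed.

Let tau_w_le : tau * w <= 1 / 3.
Proof. assert (H := w_tau). assert (H1 := C_4tau_le1). assert (H3 := w_ge1). nra. Qed.

Lemma delay_w_lt1 : (tau - sigma) * exp (C * tau) < 1.
Proof. fold w. assert (H := tau_w_le). assert (H3 := w_ge1). nra. Qed.

Let kap_ge1 : 1 <= kap.
Proof. apply kappa_ge1; [apply Rmult_le_pos|..]; try lra. apply delay_w_lt1. Qed.

Let kap_eq : kap * (1 - (tau - sigma) * w) = w.
Proof. unfold kap, kappa. fold w. assert (H := delay_w_lt1). fold w in H. field. lra. Qed.

Lemma kappa_budget : 3 * (C * tau) + kappa sigma tau C <= 2.
Proof.
  fold kap. assert (H := kap_eq). assert (H1 := tau_w_le). assert (H2 := w_C_tau).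
  assert (H4 := C_4tau_le1). assert (H7 := kap_ge1). assert (H8 := w_ge1).
  assert (Hk : kap * (1 - C * tau - tau) <= 1).
  { assert ((tau - sigma) * w <= tau * w) by nra.
    assert (kap * (1 - tau * w) <= w) by nra. nra. }
  assert (3 / 4 <= 1 - C * tau - tau) by nra.
  assert (kap <= 4 / 3) by nra. nra.
Qed.

Let kap_sub_w_le : 0 <= kap - w /\ (kap - w) * ((1 - tau) * (1 - 2 * tau)) <= tau.
Proof.
  assert (Hw := w_ge1). assert (H2 := w_tau). assert (H1 := tau_w_le).
  assert (H4 := C_4tau_le1). assert (H7 := kap_ge1).
  set (yy := (tau - sigma) * w). assert (H := kap_eq). fold yy in H.
  assert (H0 : 0 <= yy <= tau * w) by (unfold yy; split; nra).
  set (A := kap - w).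
  assert (HA0 : 0 <= A) by (unfold A; nra).
  assert (HA1 : A * (1 - tau * w) <= tau * w * w).
  { assert (A * (1 - yy) = w * yy) by (unfold A; nra). nra. }
  split; auto.
  assert (Hw2 : w * w * ((1 - tau) * (1 - 2 * tau)) <= 1 - tau * w).
  { assert (w * (1 - tau) * (w * (1 - 2 * tau)) <= 1 * (w * (1 - 2 * tau)))
      by (apply Rmult_le_compat_r; nra).
    nra. }
  apply Rmult_le_reg_r with (1 - tau * w); [lra|].
  assert (0 <= (1 - tau) * (1 - 2 * tau)) by nra.
  assert (A * (1 - tau * w) * ((1 - tau) * (1 - 2 * tau))
          <= tau * w * w * ((1 - tau) * (1 - 2 * tau))) by (apply Rmult_le_compat_r; auto).
  nra.
Qed.

(* The only place where the condition on [beta] enters. *)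
Let delay_cost_lt : 4 * tau * (kap - w) < beta * zz.
Proof.
  destruct zz_bounds as [Hz1 Hz0]. destruct kap_sub_w_le as [HA0 HA2].
  assert (H4 := C_4tau_le1). set (A := kap - w) in *.
  assert (Hb3 : beta * (1 - 2 * zz) >= 4 * tau) by (unfold zz; lra).
  assert (Hz2 : 0 < 1 - 2 * zz).
  { destruct (Rlt_le_dec 0 (1 - 2 * zz)); auto.
    assert (beta * (1 - 2 * zz) <= 0) by nra. lra. }
  apply Rnot_le_lt. intros Hc.
  assert (Hs3 : zz <= A * (1 - 2 * zz)).
  { apply Rmult_le_reg_l with (4 * tau); [lra|].
    assert (4 * tau * zz <= beta * zz * (1 - 2 * zz)) by nra.
    assert (beta * zz * (1 - 2 * zz) <= 4 * tau * A * (1 - 2 * zz))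
      by (apply Rmult_le_compat_r; lra).
    lra. }
  assert (Hs4 : zz * ((1 - tau) * (1 - 2 * tau)) <= tau * (1 - 2 * zz)).
  { assert (0 <= (1 - tau) * (1 - 2 * tau)) by nra.
    assert (zz * ((1 - tau) * (1 - 2 * tau)) <= A * (1 - 2 * zz) * ((1 - tau) * (1 - 2 * tau)))
      by (apply Rmult_le_compat_r; auto).
    assert (A * ((1 - tau) * (1 - 2 * tau)) * (1 - 2 * zz) <= tau * (1 - 2 * zz))
      by (apply Rmult_le_compat_r; lra).
    nra. }
  assert (Hs5 : zz * (1 - tau + 2 * tau * tau) <= tau) by nra.
  assert (Hp2 : 0 < 1 - tau + 2 * tau * tau) by nra.
  assert ((2 * tau + tau * tau) * (1 - tau + 2 * tau * tau)
          <= zz * ((1 + tau) * (1 + tau)) * (1 - tau + 2 * tau * tau))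
    by (apply Rmult_le_compat_r; lra).
  assert (zz * (1 - tau + 2 * tau * tau) * ((1 + tau) * (1 + tau)) <= tau * ((1 + tau) * (1 + tau)))
    by (apply Rmult_le_compat_r; nra).
  assert (tau * (1 - 3 * tau + 2 * tau * tau + 2 * tau * tau * tau) <= 0) by nra.
  assert (0 < tau * (1 - 3 * tau + 2 * tau * tau + 2 * tau * tau * tau))
    by (apply Rmult_lt_0_compat; nra).
  lra.
Qed.

Lemma rate_margin : C + 4 * tau * kappa sigma tau C * exp (C * tau) < p.
Proof.
  fold kap w. assert (H1 := delay_cost_lt). assert (H2 := w_ge1). fold w zz in Hrate. nra.
Qed.

End Rates.

Lemma layer_budget sigma tau C kap n :
  0 < sigma <= tau -> 0 < C -> C + 4 * tau <= 1 -> (2 <= n)%nat -> INR n * sigma < 3 * tau ->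
  1 <= kap -> 3 * (C * tau) + kap <= 2 ->
  C * (INR n * sigma) * (1 + 2 * sigma) ^ n + kap * (1 + 2 * sigma) ^ n <= Zn sigma n.
Proof.
  intros Hs HC Ht Hn Hns Hk Hkap.
  assert (Hn2 : 2 <= INR n) by (replace 2 with (INR 2) by (simpl; lra); apply le_INR; auto).
  assert (HG := bernoulli (2 * sigma) n ltac:(lra)).
  assert (HZ := Zn_lower sigma ltac:(lra) n). simpl in HZ.
  set (G := (1 + 2 * sigma) ^ n) in *.
  set (c0 := C * (INR n * sigma) + kap - 1).
  assert (Hc0 : 0 <= c0 <= 1).
  { unfold c0. assert (0 <= C * (INR n * sigma)) by (apply Rmult_le_pos; nra).
    assert (C * (INR n * sigma) <= C * (3 * tau)) by (apply Rmult_le_compat_l; lra). lra. }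
  assert (1 <= G * (1 - 2 * sigma * c0)).
  { assert (INR n * (2 * sigma) * (2 * sigma * c0) <= INR n * (2 * sigma) * (1 / 2))
      by (apply Rmult_le_compat_l; nra).
    assert ((1 + INR n * (2 * sigma)) * (1 - 2 * sigma * c0) <= G * (1 - 2 * sigma * c0))
      by (apply Rmult_le_compat_r; nra).
    nra. }
  apply Rmult_le_reg_l with (2 * sigma); [lra|]. unfold c0 in *. nra.
Qed.

(** * Estimates along a solution *)

Section Solution.
Variables (N d : nat) (sigma tau : R) (psi : R -> R) (x0 v0 x v : nat -> R -> nat -> R).
Variables (Dx Dv : R).
Hypothesis HN : (2 <= N)%nat.
Hypothesis Hsigma : 0 < sigma.
Hypothesis Hst : sigma <= tau.
Hypothesis Hpsi_pos : forall s, 0 <= s -> 0 < psi s.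
Hypothesis Hpsi_le1 : forall s, 0 <= s -> psi s <= 1.
Hypothesis Hpsi_cont : cont_on (fun s => 0 <= s) psi.
Hypothesis Hpsi_noninc : noninc_on_nonneg psi.
Hypothesis Hx0 : forall i k, (i < N)%nat -> (k < d)%nat ->
  deriv_on_interval (-tau) 0 (fun s => x0 i s k) (fun s => v0 i s k).
Hypothesis Hsol : forall i k, (i < N)%nat -> (k < d)%nat ->
  (forall s, -tau <= s <= 0 -> x i s k = x0 i s k /\ v i s k = v0 i s k) /\
  cont_on (fun s => -tau <= s) (fun s => x i s k) /\
  cont_on (fun s => -tau <= s) (fun s => v i s k) /\
  (forall t, 0 < t ->
     is_derive (fun s => x i s k) t (v i t k) /\
     is_derive (fun s => v i s k) t (vel_rhs N d sigma tau psi x v i t k)).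
Hypothesis HDx : forall i j s t, (i < N)%nat -> (j < N)%nat -> -tau <= s <= 0 -> -tau <= t <= 0 ->
  eucl d (fun k => x0 i s k - x0 j t k) <= Dx.
Hypothesis HDv : forall i j s t, (i < N)%nat -> (j < N)%nat -> -tau <= s <= 0 -> -tau <= t <= 0 ->
  eucl d (fun k => v0 i s k - v0 j t k) <= Dv.

Let vel i t := vel_rhs N d sigma tau psi x v i t.
Let weight i j t := / (INR N - 1) * psi (eucl d (fun l => x i (t - sigma) l - x j (t - tau) l)).

Lemma N_minus1_ge1 : 1 <= INR N - 1.
Proof. assert (2 <= INR N) by (replace 2 with (INR 2) by (simpl; lra); apply le_INR; auto). lra. Qed.

Lemma weight_bounds i j t : 0 <= weight i j t <= / (INR N - 1).
Proof.
  unfold weight. assert (H := N_minus1_ge1).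
  assert (0 < / (INR N - 1)) by (apply Rinv_0_lt_compat; lra).
  assert (He := eucl_ge0 d (fun l => x i (t - sigma) l - x j (t - tau) l)).
  assert (H1 := Hpsi_pos _ He). assert (H2 := Hpsi_le1 _ He). split; nra.
Qed.

Lemma vel_lsum i t k : vel i t k = lsum (seq 0 N) (fun j =>
  if Nat.eqb j i then 0 else weight i j t * (v j (t - tau) k - v i (t - sigma) k)).
Proof. reflexivity. Qed.

Lemma dot_vel e i t : dot d e (vel i t) = lsum (seq 0 N) (fun j =>
  if Nat.eqb j i then 0 else weight i j t * dot d e (fun k => v j (t - tau) k - v i (t - sigma) k)).
Proof.
  unfold dot at 1. rewrite (lsum_ext _ _ (fun k => lsum (seq 0 N) (fun j => e k *
    (if Nat.eqb j i then 0 else weight i j t * (v j (t - tau) k - v i (t - sigma) k))))).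
  - rewrite lsum_swap. apply lsum_ext. intros j _. destruct (Nat.eqb j i).
    + rewrite (lsum_ext _ _ (fun _ => 0)), lsum_const by (intros; ring). ring.
    + unfold dot. rewrite <- lsum_scal. apply lsum_ext. intros; ring.
  - intros k _. rewrite vel_lsum, <- lsum_scal. reflexivity.
Qed.

(* The weights [weight i j t], [j <> i], sum to at most 1. *)
Lemma eucl_vel_le i t M : (i < N)%nat -> 0 <= M ->
  (forall j, (j < N)%nat -> j <> i -> eucl d (fun k => v j (t - tau) k - v i (t - sigma) k) <= M) ->
  eucl d (vel i t) <= M.
Proof.
  intros Hi HM H.
  destruct (Req_dec (eucl d (vel i t)) 0) as [H0|Hne]; [lra|].
  assert (Hp : 0 < eucl d (vel i t)) by (assert (H1 := eucl_ge0 d (vel i t)); lra).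
  destruct (unit_dirP d _ Hp) as [He1 He2]. rewrite <- He2, dot_vel.
  assert (HN1 := N_minus1_ge1).
  apply Rle_trans with (lsum (seq 0 N) (fun j => (/ (INR N - 1) * M) * (if Nat.eqb j i then 0 else 1))).
  - apply lsum_le. intros j Hj. apply in_seq in Hj. destruct (Nat.eqb_spec j i) as [|Hji]; [lra|].
    assert (Hc := weight_bounds i j t).
    assert (Hd := dot_le_eucl_unit d (unit_dir d (vel i t))
                    (fun k => v j (t - tau) k - v i (t - sigma) k) ltac:(lra)).
    assert (Hm := H j ltac:(lia) Hji).
    apply Rle_trans with (weight i j t * M); [apply Rmult_le_compat_l; lra|].
    rewrite Rmult_1_r. apply Rmult_le_compat_r; lra.
  - rewrite lsum_scal, lsum_count_neq by auto. right. field. lra.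
Qed.

Lemma dot_vel_le_of_max e i t c E : (i < N)%nat -> 0 <= c -> 0 <= E ->
  (forall j, (j < N)%nat -> j <> i -> c <= weight i j t) ->
  (forall j, (j < N)%nat -> dot d e (v j t) <= dot d e (v i t)) ->
  (forall j, (j < N)%nat -> j <> i ->
     dot d e (fun k => v j (t - tau) k - v i (t - sigma) k) <= dot d e (v j t) - dot d e (v i t) + E) ->
  dot d e (vel i t) <=
    c * (lsum (seq 0 N) (fun j => dot d e (v j t)) - INR N * dot d e (v i t)) + E.
Proof.
  intros Hi Hc HE Hw Hmax Herr. assert (HN1 := N_minus1_ge1).
  set (u := fun j => dot d e (v j t)).
  rewrite dot_vel. apply Rle_trans with (lsum (seq 0 N) (fun j =>
    c * (u j - u i) + E / (INR N - 1) * (if Nat.eqb j i then 0 else 1))).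
  - apply lsum_le. intros j Hj. apply in_seq in Hj.
    destruct (Nat.eqb_spec j i) as [->|Hji]; [ring_simplify; lra|].
    assert (Hwij := Hw j ltac:(lia) Hji). assert (Hwb := weight_bounds i j t).
    assert (Huj := Hmax j ltac:(lia)). assert (He := Herr j ltac:(lia) Hji).
    assert (weight i j t * E <= E / (INR N - 1)).
    { unfold Rdiv. rewrite Rmult_comm. apply Rmult_le_compat_l; lra. }
    unfold u. nra.
  - rewrite lsum_plus, !lsum_scal, lsum_count_neq, lsum_minus, lsum_const, length_seq by auto.
    right. unfold u. field. lra.
Qed.

Lemma v_cont_on i k a b : (i < N)%nat -> (k < d)%nat -> -tau <= a ->
  cont_on (fun s => a <= s <= b) (fun s => v i s k).
Proof.
  intros Hi Hk Ha u Hu. destruct (Hsol i k Hi Hk) as [_ [_ [Hc _]]].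
  apply (filterlim_within_subset _ (fun s => -tau <= s)); [intros; lra|]. apply Hc; lra.
Qed.

Lemma v_continuous i k t : (i < N)%nat -> (k < d)%nat -> -tau < t ->
  filterlim (fun s => v i s k) (locally t) (locally (v i t k)).
Proof.
  intros Hi Hk Ht. destruct (Hsol i k Hi Hk) as [_ [_ [Hc _]]].
  apply (filterlim_within_interior (fun s => -tau <= s) _ _ _ (mkposreal (t + tau) ltac:(lra))).
  - intros s Hs. simpl in Hs. apply Rabs_lt_between in Hs. lra.
  - apply Hc; lra.
Qed.

Lemma v_is_derive i k t : (i < N)%nat -> (k < d)%nat -> 0 < t ->
  is_derive (fun s => v i s k) t (vel i t k).
Proof. intros Hi Hk Ht. apply (Hsol i k Hi Hk). exact Ht. Qed.

Lemma v_increment_le i a b M : (i < N)%nat -> 0 <= a <= b -> 0 <= M ->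
  (forall u, a < u < b -> eucl d (vel i u) <= M) ->
  eucl d (fun k => v i b k - v i a k) <= M * (b - a).
Proof.
  intros Hi Hab HM H. apply (eucl_mvt_le d (fun s => v i s) (vel i)); auto; try lra.
  - intros k Hk. apply v_cont_on; auto; lra.
  - intros k u Hk Hu. apply v_is_derive; auto; lra.
Qed.

Lemma v_init_le i j s t : (i < N)%nat -> (j < N)%nat -> -tau <= s <= 0 -> -tau <= t <= 0 ->
  eucl d (fun k => v i s k - v j t k) <= Dv.
Proof.
  intros Hi Hj Hs Ht. rewrite (eucl_ext d _ (fun k => v0 i s k - v0 j t k)); [apply HDv; auto|].
  intros k Hk. rewrite (proj2 (proj1 (Hsol i k Hi Hk) s Hs)), (proj2 (proj1 (Hsol j k Hj Hk) t Ht)).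
  reflexivity.
Qed.

Lemma Dv_nonneg : 0 <= Dv.
Proof.
  eapply Rle_trans; [apply eucl_ge0|]. apply (v_init_le 0 0 0 0); lia || lra.
Qed.

(* On the layer [n sigma, (n+1) sigma] all delayed arguments lie in earlier layers, so
   |v'| is bounded by the previous diameter and each endpoint moves by at most sigma times it. *)
Lemma v_layer_le n i j s t : (i < N)%nat -> (j < N)%nat ->
  -tau <= s <= INR n * sigma -> -tau <= t <= INR n * sigma ->
  eucl d (fun k => v i s k - v j t k) <= (1 + 2 * sigma) ^ n * Dv.
Proof.
  assert (HDv0 := Dv_nonneg).
  revert i j s t. induction n as [|n IH]; intros i j s t Hi Hj Hs Ht.
  { simpl in Hs, Ht. rewrite pow_O, Rmult_1_l. apply v_init_le; auto; lra. }
  set (Dn := (1 + 2 * sigma) ^ n * Dv).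
  assert (HDn : 0 <= Dn) by (apply Rmult_le_pos; [apply pow_le|]; lra).
  assert (Hn0 : 0 <= INR n) by apply pos_INR. rewrite S_INR in Hs, Ht.
  set (m := INR n * sigma).
  assert (Hclip : forall l s, (l < N)%nat -> -tau <= s <= (INR n + 1) * sigma ->
     eucl d (fun k => v l s k - v l (Rmin s m) k) <= sigma * Dn).
  { intros l s' Hl Hs'. destruct (Rle_dec s' m) as [Hle|Hgt].
    - rewrite Rmin_left, eucl_zero by (auto || intros; ring). nra.
    - rewrite Rmin_right by lra.
      apply Rle_trans with (Dn * (s' - m)); [|unfold m in *; nra].
      apply v_increment_le; auto; [unfold m in *; split; nra|].
      intros u Hu. apply eucl_vel_le; auto. intros l' Hl' _. apply IH; auto; unfold m in *; nra. }
  assert (Hm : forall s, -tau <= s -> -tau <= Rmin s m <= m)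
    by (intros s' Hs'; split; [apply Rmin_glb; unfold m; nra|apply Rmin_r]).
  assert (E1 := Hclip i s Hi Hs). assert (E2 := Hclip j t Hj Ht).
  assert (E3 := IH i j (Rmin s m) (Rmin t m) Hi Hj (Hm s ltac:(lra)) (Hm t ltac:(lra))).
  rewrite eucl_sub_sym in E2.
  assert (T1 := eucl_sub_triangle d (v i s) (v i (Rmin s m)) (v j t)).
  assert (T2 := eucl_sub_triangle d (v i (Rmin s m)) (v j (Rmin t m)) (v j t)).
  replace ((1 + 2 * sigma) ^ S n * Dv) with ((1 + 2 * sigma) * Dn) by (unfold Dn; simpl; ring).
  fold Dn in E3. nra.
Qed.

Lemma x_init_le i j s t : (i < N)%nat -> (j < N)%nat -> -tau <= s <= 0 -> -tau <= t <= 0 ->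
  eucl d (fun k => x i s k - x j t k) <= Dx.
Proof.
  intros Hi Hj Hs Ht. rewrite (eucl_ext d _ (fun k => x0 i s k - x0 j t k)); [apply HDx; auto|].
  intros k Hk. rewrite (proj1 (proj1 (Hsol i k Hi Hk) s Hs)), (proj1 (proj1 (Hsol j k Hj Hk) t Ht)).
  reflexivity.
Qed.

Lemma Dx_nonneg : 0 <= Dx.
Proof. eapply Rle_trans; [apply eucl_ge0|]. apply (x_init_le 0 0 0 0); lia || lra. Qed.

Lemma x_is_derive i k t : (i < N)%nat -> (k < d)%nat -> -tau < t -> t <> 0 ->
  is_derive (fun s => x i s k) t (v i t k).
Proof.
  intros Hi Hk Ht Ht0. destruct (Hsol i k Hi Hk) as [Heq [_ [_ Hd]]].
  destruct (Rlt_dec 0 t) as [Hp|Hn]; [apply Hd; auto|].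
  assert (H := deriv_on_interval_is_derive (-tau) 0 _ _ t ltac:(lra) (Hx0 i k Hi Hk)).
  simpl in H. rewrite <- (proj2 (Heq t ltac:(lra))) in H.
  apply (is_derive_ext_loc (fun s => x0 i s k)); auto.
  exists (mkposreal _ (Rmin_stable_in_posreal (mkposreal (t + tau) ltac:(lra))
                                              (mkposreal (- t) ltac:(lra)))).
  intros y Hy. rewrite ball_Rabs in Hy. simpl in Hy.
  assert (Rmin (t + tau) (- t) <= t + tau) by apply Rmin_l.
  assert (Rmin (t + tau) (- t) <= - t) by apply Rmin_r.
  apply Rabs_lt_between in Hy. symmetry. apply Heq. lra.
Qed.

Lemma x_shift_cont_on i k a b c : (i < N)%nat -> (k < d)%nat -> -tau <= a - c ->
  cont_on (fun s => a <= s <= b) (fun s => x i (s - c) k).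
Proof.
  intros Hi Hk Ha u Hu. destruct (Hsol i k Hi Hk) as [_ [Hc _]].
  apply (filterlim_within_subset _ (fun s => -tau <= s - c)); [intros; lra|].
  apply (filterlim_within_shift (fun s => -tau <= s) (fun s => x i s k)). apply Hc. lra.
Qed.


Lemma x_gap_le C i j a c r B0 L T : 0 < C ->
  (i < N)%nat -> (j < N)%nat -> 0 <= a <= tau -> 0 <= c <= tau -> 0 <= r -> 0 <= B0 -> 0 <= L -> 0 <= T ->
  (forall u, 0 < u <= T -> u <= r -> eucl d (fun k => v i (u - a) k - v j (u - c) k) <= B0) ->
  (forall u, T <= u <= r -> eucl d (fun k => v i (u - a) k - v j (u - c) k) <= L * exp (- C * (u - T))) ->
  eucl d (fun k => x i (r - a) k - x j (r - c) k) <= Dx + T * B0 + L / C.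
Proof.
  intros HC Hi Hj Ha Hc Hr HB0 HL HT H1 H2.
  set (W := fun k => x i (r - a) k - x j (r - c) k).
  destruct (Req_dec (eucl d W) 0) as [H0|Hne].
  { rewrite H0. assert (Dx0 := Dx_nonneg). assert (0 <= L / C) by (apply Rdiv_le_0_compat; lra).
    assert (0 <= T * B0) by (apply Rmult_le_pos; lra). lra. }
  destruct (unit_dirP d W ltac:(assert (H := eucl_ge0 d W); lra)) as [He1 He2].
  set (e := unit_dir d W) in *.
  set (h := fun s => dot d e (fun k => x i (s - a) k - x j (s - c) k)).
  set (dh := fun s => dot d e (fun k => v i (s - a) k - v j (s - c) k)).
  assert (Hh0 : h 0 <= Dx).
  { unfold h. eapply Rle_trans; [apply dot_le_eucl_unit; lra|].
    rewrite !Rminus_0_l. apply x_init_le; auto; lra. }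
  assert (Hdh : forall u, dh u <= eucl d (fun k => v i (u - a) k - v j (u - c) k))
    by (intros u; apply dot_le_eucl_unit; lra).
  assert (Hinc : h r - h 0 <= T * B0 + L / C).
  { apply (mvt_le_exp_tail h dh [a; c]); auto.
    - intros u Hu. apply filterlim_dot; [intros; apply filterlim_const|].
      intros k Hk. apply filterlim_Rminus; apply x_shift_cont_on; auto; lra.
    - intros u Hu Hac. apply is_derive_dot. intros k Hk.
      apply (is_derive_minus (fun s => x i (s - a) k) (fun s => x j (s - c) k));
        apply (is_derive_shift (fun s => x _ s k)), x_is_derive; auto; try lra;
        intros Habs; apply Hac; simpl; lra.
    - intros u Hu Hur. eapply Rle_trans; [apply Hdh|]. apply H1; lra.
    - intros u Hu. eapply Rle_trans; [apply Hdh|]. apply H2; lra. }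
  rewrite <- He2. change (dot d e W) with (h r). lra.
Qed.

Lemma gap_continuous i j t : (i < N)%nat -> (j < N)%nat -> -tau < t ->
  filterlim (fun s => eucl d (fun k => v i s k - v j s k)) (locally t)
    (locally (eucl d (fun k => v i t k - v j t k))).
Proof.
  intros Hi Hj Ht. apply (filterlim_eucl d (fun s k => v i s k - v j s k)).
  intros k Hk. apply filterlim_Rminus; apply v_continuous; auto.
Qed.

(** * Exponential decay of the velocity diameter *)

Section Decay.
Variables (C : R) (n : nat) (eps pl : R).
Hypothesis HC : 0 < C.
Hypothesis Heps : 0 < eps.

Let T0 := INR n * sigma.
Hypothesis HT0 : 2 * tau <= T0.
Let B := (1 + 2 * sigma) ^ n * Dv.
Let w := exp (C * tau).
Let kap := kappa sigma tau C.
Let Dmax := Dx + T0 * B + kap * (B + eps) / C.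
Hypothesis Hdelay : (tau - sigma) * w < 1.
Hypothesis Hpl : C + 4 * tau * kap * w < pl.

Hypothesis Hpsi_pl : forall s, 0 <= s <= Dmax -> pl <= psi s.

Let F s := (B + eps) * exp (- C * (s - T0)).

(* The bootstrap hypothesis of the continuity argument. *)
Let Inv s :=
  (forall i j, (i < N)%nat -> (j < N)%nat -> eucl d (fun k => v i s k - v j s k) < F s) /\
  (forall j, (j < N)%nat -> eucl d (vel j s) <= kap * F s).

Let w_ge1 : 1 <= w.
Proof. apply exp_ge1, Rmult_le_pos; lra. Qed.

Let kap_ge1 : 1 <= kap.
Proof. apply kappa_ge1; auto. apply Rmult_le_pos; lra. Qed.

Let B_nonneg : 0 <= B.
Proof. apply Rmult_le_pos; [apply pow_le; lra|apply Dv_nonneg]. Qed.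

Lemma F_pos s : 0 < F s.
Proof. apply Rmult_lt_0_compat; [assert (H := B_nonneg); lra|apply exp_pos]. Qed.

Lemma F_shift s : F (s - tau) = w * F s.
Proof.
  unfold F, w. replace (- C * (s - tau - T0)) with (C * tau + - C * (s - T0)) by ring.
  rewrite exp_plus. ring.
Qed.

Lemma F_antitone s t : s <= t -> F t <= F s.
Proof.
  intros Hst'. apply Rmult_le_compat_l; [assert (H := B_nonneg); lra|].
  destruct (Req_dec s t) as [->|Hne]; [lra|]. apply Rlt_le, exp_increasing. nra.
Qed.

Lemma F_ge_before s : s <= T0 -> B + eps <= F s.
Proof.
  intros Hs. assert (H := B_nonneg).
  assert (1 <= exp (- C * (s - T0))).
  { apply exp_ge1. nra. }
  unfold F. nra.
Qed.

Lemma Inv_before s : T0 - tau <= s <= T0 -> Inv s.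
Proof.
  intros Hs. assert (HF := F_ge_before s ltac:(lra)). assert (Hk := kap_ge1). assert (HFp := F_pos s).
  split.
  - intros i j Hi Hj. eapply Rle_lt_trans; [apply (v_layer_le n); auto; unfold T0 in *; lra|].
    fold B. lra.
  - intros j Hj. apply Rle_trans with B; [|nra].
    apply eucl_vel_le; auto. intros l Hl _. apply v_layer_le; auto; unfold T0 in *; lra.
Qed.

Lemma v_increment_past_le t j h : T0 <= t -> 0 <= h <= tau ->
  (forall u, T0 - tau <= u < t -> Inv u) -> (j < N)%nat ->
  eucl d (fun k => v j t k - v j (t - h) k) <= kap * F (t - tau) * h.
Proof.
  intros Ht Hh HInv Hj. assert (Hk := kap_ge1). assert (HF := F_pos (t - tau)).
  apply Rle_trans with (kap * F (t - tau) * (t - (t - h))); [|right; ring].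
  apply v_increment_le; auto; [lra|nra|]. intros u Hu.
  eapply Rle_trans; [apply (proj2 (HInv u ltac:(lra))); auto|].
  apply Rmult_le_compat_l; [lra|]. apply F_antitone; lra.
Qed.

(* [kap] is the fixed point making this estimate close: kap F(s) = w F(s) (1 + kap (tau - sigma)). *)
Lemma delayed_gap_le s : T0 <= s -> (forall u, s - tau <= u <= s - sigma -> Inv u) ->
  forall i j, (i < N)%nat -> (j < N)%nat ->
  eucl d (fun k => v i (s - tau) k - v j (s - sigma) k) <= kap * F s.
Proof.
  intros Hs HInv i j Hi Hj. assert (Hk := kap_ge1). assert (HF := F_pos (s - tau)).
  assert (E1 : eucl d (fun k => v i (s - tau) k - v j (s - tau) k) <= F (s - tau))
    by (apply Rlt_le, (proj1 (HInv (s - tau) ltac:(lra))); auto).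
  assert (E2 : eucl d (fun k => v j (s - sigma) k - v j (s - tau) k) <= kap * F (s - tau) * (tau - sigma)).
  { replace (tau - sigma) with ((s - sigma) - (s - tau)) by ring.
    apply v_increment_le; auto; [lra|nra|]. intros u Hu.
    eapply Rle_trans; [apply (proj2 (HInv u ltac:(lra))); auto|].
    apply Rmult_le_compat_l; [lra|]. apply F_antitone; lra. }
  rewrite eucl_sub_sym in E2.
  assert (T := eucl_sub_triangle d (v i (s - tau)) (v j (s - tau)) (v j (s - sigma))).
  rewrite F_shift in E1, E2. assert (HR := kappa_fixed sigma tau C Hdelay). fold w kap in HR.
  replace (kap * F s) with (w * F s * (1 + kap * (tau - sigma))) by (rewrite <- HR at 2; ring).
  lra.
Qed.

Lemma vel_le_of_past s : T0 <= s -> (forall u, s - tau <= u <= s - sigma -> Inv u) ->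
  forall j, (j < N)%nat -> eucl d (vel j s) <= kap * F s.
Proof.
  intros Hs HInv j Hj. assert (Hk := kap_ge1). assert (HF := F_pos s).
  apply eucl_vel_le; auto; [nra|]. intros l Hl _. apply delayed_gap_le; auto.
Qed.

Lemma weight_arg_le t i j : T0 <= t -> (forall u, T0 - tau <= u < t -> Inv u) ->
  (i < N)%nat -> (j < N)%nat -> eucl d (fun k => x i (t - sigma) k - x j (t - tau) k) <= Dmax.
Proof.
  intros Ht HInv Hi Hj. assert (Hk := kap_ge1). assert (HB := B_nonneg).
  apply (x_gap_le C); auto; try lra; try nra.
  - intros u Hu1 Hu2. apply v_layer_le; auto; unfold T0 in *; lra.
  - intros u Hu. rewrite eucl_sub_sym.
    replace (kap * (B + eps) * exp (- C * (u - T0))) with (kap * F u) by (unfold F; ring).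
    apply delayed_gap_le; auto; [lra|]. intros u' Hu'. apply HInv. lra.
Qed.

Lemma weight_ge t i j : T0 <= t -> (forall u, T0 - tau <= u < t -> Inv u) ->
  (i < N)%nat -> (j < N)%nat -> pl / (INR N - 1) <= weight i j t.
Proof.
  intros Ht HInv Hi Hj. assert (HN1 := N_minus1_ge1). unfold weight, Rdiv. rewrite Rmult_comm.
  apply Rmult_le_compat_l; [apply Rlt_le, Rinv_0_lt_compat; lra|].
  apply Hpsi_pl. split; [apply eucl_ge0|]. apply weight_arg_le; auto.
Qed.

Lemma delayed_dot_le e t i j : eucl d e <= 1 -> T0 <= t ->
  (forall u, T0 - tau <= u < t -> Inv u) -> (i < N)%nat -> (j < N)%nat ->
  dot d e (fun k => v j (t - tau) k - v i (t - sigma) k) <=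
    dot d e (v j t) - dot d e (v i t) + (tau + sigma) * (kap * w * F t).
Proof.
  intros He Ht HInv Hi Hj.
  rewrite (dot_sub3 d e _ (v j t) (v i t)), (dot_minusr d e (v j t) (v i t)).
  assert (E1 := v_increment_past_le t j tau Ht ltac:(lra) HInv Hj).
  assert (E2 := v_increment_past_le t i sigma Ht ltac:(lra) HInv Hi).
  rewrite F_shift in E1, E2.
  assert (A1 := Rabs_dot_le_eucl_unit d e (fun k => v j t k - v j (t - tau) k) He).
  assert (A2 := Rabs_dot_le_eucl_unit d e (fun k => v i t k - v i (t - sigma) k) He).
  apply Rabs_le_between in A1, A2.
  replace (dot d e (fun k => v j (t - tau) k - v j t k))
    with (- dot d e (fun k => v j t k - v j (t - tau) k)) by (rewrite !dot_minusr; ring).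
  nra.
Qed.

Lemma pl_nonneg : 0 <= pl.
Proof. assert (Hk := kap_ge1). assert (Hw := w_ge1). assert (0 <= tau * (kap * w)) by (apply Rmult_le_pos; nra). nra. Qed.

(* Along [e], particle [i] leads and [i'] trails: the consensus term pulls them together
   at rate [pl N / (N - 1)], up to the delay errors. *)
Lemma extremal_pair_contracts e t i i' : eucl d e <= 1 -> T0 <= t ->
  (forall u, T0 - tau <= u < t -> Inv u) -> (i < N)%nat -> (i' < N)%nat ->
  (forall j, (j < N)%nat -> dot d e (v i' t) <= dot d e (v j t) <= dot d e (v i t)) ->
  dot d e (vel i t) - dot d e (vel i' t) <=
    - (pl / (INR N - 1) * INR N) * (dot d e (v i t) - dot d e (v i' t)) + 2 * ((tau + sigma) * (kap * w * F t)).
Proof.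
  intros He Ht HInv Hi Hi' Hext.
  assert (Hk := kap_ge1). assert (Hw := w_ge1). assert (HN1 := N_minus1_ge1). assert (HF := F_pos t).
  set (E := (tau + sigma) * (kap * w * F t)).
  assert (HE : 0 <= E) by (unfold E; apply Rmult_le_pos; [lra|]; apply Rmult_le_pos; nra).
  assert (Hc : 0 <= pl / (INR N - 1)) by (apply Rdiv_le_0_compat; [apply pl_nonneg|lra]).
  set (e' := fun k => - e k).
  assert (He' : eucl d e' <= 1) by (unfold e'; rewrite eucl_oppl; lra).
  assert (Htop := dot_vel_le_of_max e i t (pl / (INR N - 1)) E Hi Hc HE
    (fun j Hj _ => weight_ge t i j Ht HInv Hi Hj) (fun j Hj => proj2 (Hext j Hj))
    (fun j Hj _ => delayed_dot_le e t i j He Ht HInv Hi Hj)).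
  assert (Hbot := dot_vel_le_of_max e' i' t (pl / (INR N - 1)) E Hi' Hc HE
    (fun j Hj _ => weight_ge t i' j Ht HInv Hi' Hj)
    (fun j Hj => ltac:(unfold e'; rewrite !dot_oppl; apply Ropp_le_contravar, (Hext j Hj)))
    (fun j Hj _ => delayed_dot_le e' t i' j He' Ht HInv Hi' Hj)).
  unfold e' in Hbot. rewrite !dot_oppl in Hbot.
  rewrite (lsum_ext _ _ (fun j => -1 * dot d e (v j t))), lsum_scal in Hbot
    by (intros; rewrite dot_oppl; ring).
  lra.
Qed.

Lemma touching_rise e t i i' : eucl d e <= 1 -> T0 <= t ->
  (forall u, T0 - tau <= u < t -> Inv u) -> (i < N)%nat -> (i' < N)%nat ->
  dot d e (v i t) - dot d e (v i' t) = F t ->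
  0 <= dot d e (vel i t) - dot d e (vel i' t) + C * F t.
Proof.
  intros He Ht HInv Hi Hi' Htouch.
  apply (is_derive_ge0_of_neg_left (fun s => dot d e (v i s) - dot d e (v i' s) - F s) t _ (T0 - tau));
    [lra| |lra|].
  - replace (dot d e (vel i t) - dot d e (vel i' t) + C * F t)
      with (dot d e (vel i t) - dot d e (vel i' t) - - C * (B + eps) * exp (- C * (t - T0)))
      by (unfold F; ring).
    apply is_derive_Rminus; [|apply is_derive_exp_decay].
    apply is_derive_Rminus; apply is_derive_dot; intros k Hk; apply v_is_derive; auto; lra.
  - intros s Hs. rewrite <- dot_minusr.
    assert (H1 := dot_le_eucl_unit d e (fun k => v i s k - v i' s k) He).
    assert (H2 := proj1 (HInv s ltac:(lra)) i i' Hi Hi'). lra.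
Qed.

(* Touching would need a rate at least [-C], but the contraction rate exceeds
   [C + 4 tau kap w]. *)
Lemma no_touching t i i' : T0 <= t -> (forall u, T0 - tau <= u < t -> Inv u) ->
  (i < N)%nat -> (i' < N)%nat ->
  (forall a b, (a < N)%nat -> (b < N)%nat -> eucl d (fun k => v a t k - v b t k) <= F t) ->
  eucl d (fun k => v i t k - v i' t k) = F t -> False.
Proof.
  intros Ht HInv Hi Hi' Hall Heq.
  assert (Hk := kap_ge1). assert (Hw := w_ge1). assert (HN1 := N_minus1_ge1). assert (HF := F_pos t).
  set (W := fun k => v i t k - v i' t k).
  destruct (unit_dirP d W ltac:(unfold W; lra)) as [He1 He2]. set (e := unit_dir d W) in *.
  assert (Hspread : dot d e (v i t) - dot d e (v i' t) = F t)
    by (rewrite <- dot_minusr; change (dot d e W = F t); rewrite He2; exact Heq).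
  assert (Hext : forall j, (j < N)%nat -> dot d e (v i' t) <= dot d e (v j t) <= dot d e (v i t)).
  { intros j Hj.
    assert (H1 := dot_le_eucl_unit d e (fun k => v i t k - v j t k) ltac:(lra)).
    assert (H2 := dot_le_eucl_unit d e (fun k => v j t k - v i' t k) ltac:(lra)).
    rewrite dot_minusr in H1, H2. assert (H3 := Hall i j Hi Hj). assert (H4 := Hall j i' Hj Hi'). lra. }
  assert (Hcon := extremal_pair_contracts e t i i' ltac:(lra) Ht HInv Hi Hi' Hext).
  assert (Hrise := touching_rise e t i i' ltac:(lra) Ht HInv Hi Hi' Hspread).
  rewrite Hspread in Hcon.
  assert (Hpl_N : pl <= pl / (INR N - 1) * INR N).
  { assert (Hpl0 := pl_nonneg). apply Rmult_le_reg_r with (INR N - 1); [lra|].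
    replace (pl / (INR N - 1) * INR N * (INR N - 1)) with (pl * INR N) by (field; lra). nra. }
  assert (pl * F t <= pl / (INR N - 1) * INR N * F t) by (apply Rmult_le_compat_r; lra).
  assert ((tau + sigma) * (kap * w * F t) <= 2 * tau * (kap * w * F t))
    by (apply Rmult_le_compat_r; [apply Rmult_le_pos; nra|lra]).
  assert ((C + 4 * tau * kap * w - pl) * F t < 0) by (apply Rmult_neg_pos; lra).
  nra.
Qed.

Lemma Inv_step t : T0 - tau <= t -> (forall s, T0 - tau <= s < t -> Inv s) ->
  exists del, 0 < del /\ forall s, t <= s < t + del -> Inv s.
Proof.
  intros Ht HInv. destruct (Rlt_dec t T0) as [HtT|HtT].
  { exists (T0 - t). split; [lra|]. intros s Hs. apply Inv_before. lra. }
  assert (Hcont : forall a b, (a < N)%nat -> (b < N)%nat -> filterlim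
      (fun s => eucl d (fun k => v a s k - v b s k)) (locally t) (locally (eucl d (fun k => v a t k - v b t k))))
    by (intros a b Ha Hb; apply gap_continuous; auto; lra).
  assert (Hle : forall a b, (a < N)%nat -> (b < N)%nat -> eucl d (fun k => v a t k - v b t k) <= F t).
  { intros a b Ha Hb. apply (le_of_lt_left (fun s => eucl d (fun k => v a s k - v b s k)) F t (t - (T0 - tau))); [lra|auto|apply filterlim_exp_decay|].
    intros s Hs. apply (proj1 (HInv s ltac:(lra))); auto. }
  assert (Hlt : forall a b, (a < N)%nat -> (b < N)%nat -> eucl d (fun k => v a t k - v b t k) < F t).
  { intros a b Ha Hb. destruct (Rle_lt_or_eq_dec _ _ (Hle a b Ha Hb)) as [|Heq]; auto.
    exfalso. apply (no_touching t a b); auto; lra. }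
  destruct (right_nbhd_Forall (seq 0 N) (fun a s => forall b, In b (seq 0 N) ->
      eucl d (fun k => v a s k - v b s k) < F s) t) as [del [Hdel Hd]].
  { intros a Ha. apply in_seq in Ha. apply right_nbhd_Forall. intros b Hb. apply in_seq in Hb.
    apply lt_right_of_lt; [apply Hcont; lia|apply filterlim_exp_decay|apply Hlt; lia]. }
  exists (Rmin del sigma). split; [apply Rmin_pos; lra|].
  assert (Rmin del sigma <= del) by apply Rmin_l. assert (Rmin del sigma <= sigma) by apply Rmin_r.
  intros s Hs. split.
  - intros a b Ha Hb. apply (Hd s); [lra|apply in_seq; lia|apply in_seq; lia].
  - apply vel_le_of_past; [lra|]. intros u Hu. apply HInv. lra.
Qed.

Lemma Inv_forever s : T0 - tau <= s -> Inv s.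
Proof. apply continuous_induction. exact Inv_step. Qed.

Lemma diam_v_le t : 0 <= t -> diam N d v t <= F t.
Proof.
  intros Ht. assert (HF := F_pos t). apply diam_le; [lra|]. intros i j Hi Hj.
  destruct (Rle_dec t T0) as [HtT|HtT].
  - apply Rle_trans with B; [apply v_layer_le; auto; unfold T0 in *; lra|].
    assert (H := F_ge_before t HtT). lra.
  - apply Rlt_le, (proj1 (Inv_forever t ltac:(lra))); auto.
Qed.

Lemma diam_x_le t : 0 <= t -> diam N d x t <= Dmax.
Proof.
  intros Ht. assert (Hk := kap_ge1). assert (HB := B_nonneg).
  apply diam_le.
  { assert (Hx := Dx_nonneg). assert (0 <= kap * (B + eps) / C) by (apply Rdiv_le_0_compat; nra).
    unfold Dmax. nra. }
  intros i j Hi Hj.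
  rewrite (eucl_ext d _ (fun k => x i (t - 0) k - x j (t - 0) k)) by (intros; rewrite Rminus_0_r; auto).
  apply (x_gap_le C); auto; try lra; try nra.
  - intros u Hu1 Hu2. rewrite !Rminus_0_r. apply v_layer_le; auto; unfold T0 in *; lra.
  - intros u Hu. rewrite !Rminus_0_r.
    replace (kap * (B + eps) * exp (- C * (u - T0))) with (kap * F u) by (unfold F; ring).
    assert (HF := F_pos u).
    apply Rle_trans with (F u); [apply Rlt_le, (proj1 (Inv_forever u ltac:(lra))); auto|nra].
Qed.

End Decay.

Lemma flocking_of_margin C n D : 0 < C -> 2 * tau <= INR n * sigma ->
  (tau - sigma) * exp (C * tau) < 1 ->
  Dx + INR n * sigma * ((1 + 2 * sigma) ^ n * Dv)
    + kappa sigma tau C * ((1 + 2 * sigma) ^ n * Dv) / C <= D ->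
  C + 4 * tau * kappa sigma tau C * exp (C * tau) < psi D ->
  (exists M, forall t, 0 <= t -> diam N d x t <= M) /\
  is_lim (diam N d v) p_infty 0 /\
  (exists A, 0 < A /\ forall t, 0 <= t -> diam N d v t <= A * exp (- C * t)).
Proof.
  intros HC Hn Hdelay HD Hmargin.
  assert (Hk : 1 <= kappa sigma tau C) by (apply kappa_ge1; auto; apply Rmult_le_pos; lra).
  assert (HB : 0 <= (1 + 2 * sigma) ^ n * Dv) by (apply Rmult_le_pos; [apply pow_le; lra|apply Dv_nonneg]).
  assert (HT : 0 <= INR n * sigma) by lra.
  assert (HD0 : 0 <= D).
  { assert (Hx := Dx_nonneg).
    assert (0 <= kappa sigma tau C * ((1 + 2 * sigma) ^ n * Dv) / C) by (apply Rdiv_le_0_compat; nra).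
    nra. }
  set (pl := (C + 4 * tau * kappa sigma tau C * exp (C * tau) + psi D) / 2).
  destruct (lower_bound_near psi D pl Hpsi_cont Hpsi_noninc HD0 ltac:(unfold pl; lra))
    as [eta [Heta Hpsi_pl]].
  (* [eps] is chosen so that the enlarged position bound stays below [D + eta]. *)
  set (eps := eta * C / kappa sigma tau C).
  assert (Heps : 0 < eps) by (apply Rdiv_lt_0_compat; [apply Rmult_lt_0_compat|]; lra).
  assert (Hpl : C + 4 * tau * kappa sigma tau C * exp (C * tau) < pl) by (unfold pl; lra).
  assert (HDmax : forall s, 0 <= s <= Dx + INR n * sigma * ((1 + 2 * sigma) ^ n * Dv)
      + kappa sigma tau C * ((1 + 2 * sigma) ^ n * Dv + eps) / C -> pl <= psi s).
  { intros s Hs. apply Rlt_le, Hpsi_pl.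
    replace (kappa sigma tau C * ((1 + 2 * sigma) ^ n * Dv + eps) / C)
      with (kappa sigma tau C * ((1 + 2 * sigma) ^ n * Dv) / C + eta) in Hs by (unfold eps; field; lra).
    lra. }
  assert (Hdv := diam_v_le C n eps pl HC Heps Hn Hdelay Hpl HDmax).
  assert (Hdx := diam_x_le C n eps pl HC Heps Hn Hdelay Hpl HDmax).
  set (A := ((1 + 2 * sigma) ^ n * Dv + eps) * exp (C * (INR n * sigma))).
  assert (HA : 0 < A) by (apply Rmult_lt_0_compat; [lra|apply exp_pos]).
  assert (HF : forall t, ((1 + 2 * sigma) ^ n * Dv + eps) * exp (- C * (t - INR n * sigma)) = A * exp (- C * t))
    by (intros t; unfold A; rewrite Rmult_assoc, <- exp_plus; do 2 f_equal; ring).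
  split; [|split].
  - eexists. exact Hdx.
  - apply (is_lim_le_le_loc (fun _ => 0) (fun t => A * exp (- C * t))).
    + exists 0. intros y Hy. split; [apply diam_ge0|rewrite <- HF; apply Hdv; lra].
    + apply is_lim_const.
    + apply is_lim_exp_decay; auto.
  - exists A. split; auto. intros t Ht. rewrite <- HF. apply Hdv; auto.
Qed.

End Solution.

Lemma is_Delta0_nonneg N d tau f D : is_Delta0 N d tau f D -> 0 <= D.
Proof. intros [_ [i [j [s [t [_ [_ [_ [_ <-]]]]]]]]]. apply eucl_ge0. Qed.

Lemma minimal_multiple sigma tau K : 0 <= sigma -> sigma <= tau ->
  2 * tau <= IZR K * sigma -> (forall k, 2 * tau <= IZR k * sigma -> (K <= k)%Z) ->
  0 < sigma /\ exists n, K = Z.of_nat n /\ (2 <= n)%nat /\ INR n * sigma < 3 * tau.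
Proof.
  intros Hs Hst HK Hmin.
  assert (Hs0 : 0 < sigma).
  { destruct (Rle_lt_or_eq_dec 0 sigma Hs) as [|<-]; auto.
    assert (Hk := Hmin (K - 1)%Z ltac:(rewrite Rmult_0_r in *; lra)). lia. }
  assert (HK2 : (2 <= K)%Z) by (apply le_IZR; apply Rmult_le_reg_r with sigma; simpl; lra).
  split; auto. exists (Z.to_nat K). rewrite INR_IZR_INZ, Z2Nat.id by lia.
  split; [reflexivity|split; [lia|]].
  apply Rnot_le_lt. intros H. assert (Hk := Hmin (K - 1)%Z). rewrite minus_IZR in Hk.
  assert ((K <= K - 1)%Z) by (apply Hk; lra). lia.
Qed.

Lemma exp_delay_factor_nonneg tau : 0 <= tau -> 0 <= 1 - (1 + 2 * tau) * exp (-2 * tau).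
Proof.
  intros Ht. assert (H := exp_ineq1_le (2 * tau)). assert (Hp := exp_pos (2 * tau)).
  replace (-2 * tau) with (- (2 * tau)) by ring. rewrite exp_Ropp.
  assert ((1 + 2 * tau) * / exp (2 * tau) <= 1); [|lra].
  apply Rmult_le_reg_r with (exp (2 * tau)); auto. rewrite Rmult_assoc, Rinv_l by lra. lra.
Qed.

Section MarginPoint.
Variables (sigma tau beta C Dx Dv : R) (n : nat).
Hypothesis Hsigma : 0 < sigma.
Hypothesis Hst : sigma <= tau.
Hypothesis Hbeta : 0 < beta.
Hypothesis HC : 0 < C.
Hypothesis HDx : 0 <= Dx.
Hypothesis HDv : 0 <= Dv.
Hypothesis Hn : (2 <= n)%nat.

Let WK := Zn sigma n - (1 + sigma) * (Zn sigma (n - 1) + 1).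
Let ZK := Zn sigma n + Zn sigma (n - 1) * beta * (1 - (1 + 2 * tau) * exp (-2 * tau)).
Let X := 1 + / beta * exp (2 * tau + C * sigma) + exp (C * tau) * (tau - sigma).

Let WK_nonneg : 0 <= WK.
Proof. unfold WK. replace n with (S (n - 1)) at 1 by lia. apply Zn_S_excess. exact Hsigma. Qed.

Let ZK_ge : Zn sigma n <= ZK.
Proof.
  unfold ZK. assert (H := Zn_nonneg sigma Hsigma (n - 1)).
  assert (H2 := exp_delay_factor_nonneg tau ltac:(lra)).
  assert (0 <= Zn sigma (n - 1) * beta) by (apply Rmult_le_pos; lra). nra.
Qed.

Let X_ge1 : 1 <= X.
Proof.
  unfold X. assert (0 <= / beta * exp (2 * tau + C * sigma))
    by (apply Rmult_le_pos; [apply Rlt_le, Rinv_0_lt_compat|apply Rlt_le, exp_pos]; lra).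
  assert (0 <= exp (C * tau) * (tau - sigma)) by (apply Rmult_le_pos; [apply Rlt_le, exp_pos|lra]).
  lra.
Qed.

Lemma margin_point_nonneg : 0 <= Dx + WK * Dv + exp (C * tau) / C * X * ZK * Dv.
Proof.
  assert (HW := WK_nonneg). assert (HZ := ZK_ge). assert (HZ0 := Zn_nonneg sigma Hsigma n).
  assert (HX := X_ge1). assert (0 <= exp (C * tau) / C) by (apply Rdiv_le_0_compat; [apply Rlt_le, exp_pos|lra]).
  assert (0 <= WK * Dv) by (apply Rmult_le_pos; lra).
  assert (0 <= exp (C * tau) / C * X * ZK) by (apply Rmult_le_pos; [apply Rmult_le_pos|]; lra).
  assert (0 <= exp (C * tau) / C * X * ZK * Dv) by (apply Rmult_le_pos; lra). lra.
Qed.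

Lemma margin_point_ge : C + 4 * tau <= 1 -> INR n * sigma < 3 * tau ->
  1 <= kappa sigma tau C -> 3 * (C * tau) + kappa sigma tau C <= 2 ->
  Dx + INR n * sigma * ((1 + 2 * sigma) ^ n * Dv) + kappa sigma tau C * ((1 + 2 * sigma) ^ n * Dv) / C
  <= Dx + WK * Dv + exp (C * tau) / C * X * ZK * Dv.
Proof.
  intros Hsmall Hns Hk Hkap.
  assert (Hbud := layer_budget sigma tau C (kappa sigma tau C) n ltac:(lra) HC Hsmall Hn Hns Hk Hkap).
  assert (HW := WK_nonneg). assert (HZ := ZK_ge). assert (HZ0 := Zn_nonneg sigma Hsigma n).
  assert (HX := X_ge1). assert (Hw : 1 <= exp (C * tau)) by (apply exp_ge1, Rmult_le_pos; lra).
  assert (Zn sigma n <= exp (C * tau) * X * ZK).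
  { assert (Zn sigma n <= X * ZK) by nra. nra. }
  assert (HiC : 0 < / C) by (apply Rinv_0_lt_compat; lra).
  assert (Hlhs : INR n * sigma * ((1 + 2 * sigma) ^ n * Dv) + kappa sigma tau C * ((1 + 2 * sigma) ^ n * Dv) / C
    = (C * (INR n * sigma) * (1 + 2 * sigma) ^ n + kappa sigma tau C * (1 + 2 * sigma) ^ n) * / C * Dv)
    by (field; lra).
  replace (exp (C * tau) / C * X * ZK * Dv) with (exp (C * tau) * X * ZK * / C * Dv) by (field; lra).
  assert (0 <= WK * Dv) by (apply Rmult_le_pos; lra).
  assert (Zn sigma n * / C * Dv <= exp (C * tau) * X * ZK * / C * Dv)
    by (apply Rmult_le_compat_r; [lra|apply Rmult_le_compat_r; lra]).
  assert ((C * (INR n * sigma) * (1 + 2 * sigma) ^ n + kappa sigma tau C * (1 + 2 * sigma) ^ n) * / C * Dv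
          <= Zn sigma n * / C * Dv)
    by (apply Rmult_le_compat_r; [lra|apply Rmult_le_compat_r; lra]).
  lra.
Qed.

End MarginPoint.

Theorem theorem1p2
  (N d : nat) (sigma tau : R) (psi : R -> R)
  (x0 v0 x v : nat -> R -> nat -> R)
  (K : Z) (beta C Dx Dv : R) :
  (2 <= N)%nat -> (1 <= d)%nat -> 0 <= sigma -> sigma <= tau ->
  (* assumptions on psi *)
  cont_on (fun s => 0 <= s) psi -> noninc_on_nonneg psi ->
  (forall s, 0 <= s -> 0 < psi s) -> (forall s, 0 <= s -> psi s <= 1) ->
  (* initial data: x0_i in C^1, v0_i in C^0 on [-tau,0], x0_i' = v0_i *)
  (forall i k, (i < N)%nat -> (k < d)%nat ->
     cont_on (fun s => -tau <= s <= 0) (fun s => v0 i s k) /\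
     deriv_on_interval (-tau) 0 (fun s => x0 i s k) (fun s => v0 i s k)) ->
  (* (x,v) is a global solution with this initial data *)
  (forall i k, (i < N)%nat -> (k < d)%nat ->
     (forall s, -tau <= s <= 0 -> x i s k = x0 i s k /\ v i s k = v0 i s k) /\
     cont_on (fun s => -tau <= s) (fun s => x i s k) /\
     cont_on (fun s => -tau <= s) (fun s => v i s k) /\
     (forall t, 0 < t ->
        is_derive (fun s => x i s k) t (v i t k) /\
        is_derive (fun s => v i s k) t (vel_rhs N d sigma tau psi x v i t k))) ->
  (* K: smallest integer with K sigma >= 2 tau *)
  2 * tau <= IZR K * sigma ->
  (forall k : Z, 2 * tau <= IZR k * sigma -> (K <= k)%Z) ->
  (* Delta^0_x, Delta^0_v *)
  is_Delta0 N d tau x0 Dx -> is_Delta0 N d tau v0 Dv ->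
  0 < beta -> 4 * tau <= beta * (2 * exp (-2 * tau) - 1) ->
  0 < C ->
  (let ZK := Zsig sigma K + Zsig sigma (K - 1) * beta * (1 - (1 + 2 * tau) * exp (-2 * tau)) in
   let WK := Zsig sigma K - (1 + sigma) * (Zsig sigma (K - 1) + 1) in
   exp (C * tau) * (4 * tau * exp (C * tau) + beta * (1 - exp (-2 * tau))) + C
   <= psi (Dx + WK * Dv
           + exp (C * tau) / C
             * (1 + / beta * exp (2 * tau + C * sigma) + exp (C * tau) * (tau - sigma))
             * ZK * Dv)) ->
  (exists M, forall t, 0 <= t -> diam N d x t <= M) /\
  is_lim (diam N d v) p_infty 0 /\
  (exists A, 0 < A /\ forall t, 0 <= t -> diam N d v t <= A * exp (- C * t)).
Proof.
  intros HN _ Hs0 Hst Hpc Hpm Hpp Hp1 Hinit Hsol HK HKmin HDx HDv Hb Hbeta HC Hcond.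
  destruct (minimal_multiple sigma tau K Hs0 Hst HK HKmin) as [Hs [n [-> [Hn Hn3]]]].
  replace (Z.of_nat n - 1)%Z with (Z.of_nat (n - 1)) in Hcond by lia.
  rewrite !Zsig_Zn in Hcond. cbv zeta in Hcond.
  assert (HDx0 := is_Delta0_nonneg _ _ _ _ _ HDx). assert (HDv0 := is_Delta0_nonneg _ _ _ _ _ HDv).
  assert (HD0 := margin_point_nonneg sigma tau beta C Dx Dv n Hs Hst Hb HC HDx0 HDv0 Hn).
  assert (Hp := Hp1 _ HD0).
  assert (Hsmall : C + 4 * tau <= 1) by (eapply (C_4tau_le1 sigma tau beta C); eauto).
  assert (Hdelay : (tau - sigma) * exp (C * tau) < 1) by (eapply (delay_w_lt1 sigma tau beta C); eauto).
  assert (Hkap : 3 * (C * tau) + kappa sigma tau C <= 2) by (eapply (kappa_budget sigma tau beta C); eauto).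
  assert (Hk : 1 <= kappa sigma tau C) by (apply kappa_ge1; [apply Rmult_le_pos|..]; lra).
  rewrite <- INR_IZR_INZ in HK.
  eapply (flocking_of_margin N d sigma tau psi x0 v0 x v Dx Dv HN Hs Hst Hpp Hp1 Hpc Hpm
           (fun i k Hi Hk => proj2 (Hinit i k Hi Hk)) Hsol (proj1 HDx) (proj1 HDv) C n); auto.
  - apply (margin_point_ge sigma tau beta C Dx Dv n); auto.
  - eapply (rate_margin sigma tau beta C); eauto.
Qed.
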